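(* Consider the system \[ \begin{aligned} \dot S_h(t)&=\beta_h-C_{vh}\frac{I_v(t)}{N_v(t)}S_h(t)-\mu_hS_h(t),\\ \dot I_h(t)&=C_{vh}\frac{I_v(t-\tau)}{N_v(t-\tau)}S_h(t-\tau)-\mu_hI_h(t),\\ \dot S_v(t)&=\beta_v-C_{hv}I_h(t)S_v(t)-\mu_vS_v(t),\\ \dot I_v(t)&=C_{hv}I_h(t)S_v(t)-\mu_vI_v(t), \end{aligned} \] with $N_v=S_v+I_v$ and positive parameters $\beta_h,\beta_v,\mu_h,\mu_v,C_{vh},C_{hv}$. Let $R_0=\sqrt{C_{vh}C_{hv}\beta_h/(\mu_h^2\mu_v)}$. If $R_0>1$, then for any $\tau\ge0$ the unique endemic equilibrium $E^*$ (the unique equilibrium with all components positive) is globally asymptotically stable in $D$.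
   Context: $C_+=\{\varphi\in C([-\tau,0],\mathbb{R}_+^4):\varphi_3(\theta)+\varphi_4(\theta)>0\ \forall\theta\in[-\tau,0]\}$ with the sup-norm, and $D=\{\varphi\in C_+:\varphi_2(0)>0\}$. Globally asymptotically stable in $D$ means $E^*$ is locally (Lyapunov) stable and every solution with initial function in $D$ converges to $E^*$. *)

From Stdlib Require Import Reals.
From Coquelicot Require Import Coquelicot.
Open Scope R_scope.

Definition f_Sh (bh Cvh muh : R) (Sh Sv Iv : R) : R :=
  bh - Cvh * (Iv / (Sv + Iv)) * Sh - muh * Sh.
Definition f_Ih (Cvh muh : R) (Sh_d Sv_d Iv_d Ih : R) : R :=
  Cvh * (Iv_d / (Sv_d + Iv_d)) * Sh_d - muh * Ih.
Definition f_Sv (bv Chv muv : R) (Ih Sv : R) : R :=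
  bv - Chv * Ih * Sv - muv * Sv.
Definition f_Iv (Chv muv : R) (Ih Sv Iv : R) : R :=
  Chv * Ih * Sv - muv * Iv.

Definition cont_on (a b : R) (f : R -> R) : Prop :=
  forall t, a <= t <= b ->
    filterlim f (within (fun s => a <= s <= b) (locally t)) (locally (f t)).

Definition init_in_D (tau : R) (Sh Ih Sv Iv : R -> R) : Prop :=
  cont_on (- tau) 0 Sh /\ cont_on (- tau) 0 Ih /\
  cont_on (- tau) 0 Sv /\ cont_on (- tau) 0 Iv /\
  (forall t, - tau <= t <= 0 ->
     0 <= Sh t /\ 0 <= Ih t /\ 0 <= Sv t /\ 0 <= Iv t /\ 0 < Sv t + Iv t) /\
  0 < Ih 0.

(* A solution on [-tau, +oo): continuous from the right at 0 and satisfying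
   the delay system for every t > 0 (values on [-tau,0] are the initial data). *)
Definition is_solution (bh bv muh muv Cvh Chv tau : R)
    (Sh Ih Sv Iv : R -> R) : Prop :=
  filterlim Sh (at_right 0) (locally (Sh 0)) /\
  filterlim Ih (at_right 0) (locally (Ih 0)) /\
  filterlim Sv (at_right 0) (locally (Sv 0)) /\
  filterlim Iv (at_right 0) (locally (Iv 0)) /\
  forall t, 0 < t ->
    is_derive Sh t (f_Sh bh Cvh muh (Sh t) (Sv t) (Iv t)) /\
    is_derive Ih t (f_Ih Cvh muh (Sh (t - tau)) (Sv (t - tau)) (Iv (t - tau)) (Ih t)) /\
    is_derive Sv t (f_Sv bv Chv muv (Ih t) (Sv t)) /\
    is_derive Iv t (f_Iv Chv muv (Ih t) (Sv t) (Iv t)).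

Definition is_equilibrium (bh bv muh muv Cvh Chv : R) (Sh Ih Sv Iv : R) : Prop :=
  f_Sh bh Cvh muh Sh Sv Iv = 0 /\ f_Ih Cvh muh Sh Sv Iv Ih = 0 /\
  f_Sv bv Chv muv Ih Sv = 0 /\ f_Iv Chv muv Ih Sv Iv = 0.

Definition repro_number (bh muh muv Cvh Chv : R) : R :=
  sqrt (Cvh * Chv * bh / (muh ^ 2 * muv)).

From Stdlib Require Import Reals Lra ZArith Classical.
From Coquelicot Require Import Coquelicot.
Open Scope R_scope.

(* Write [u = Iv / Nv] for the infected fraction of vectors and
   [E* = (xs, ys, (1 - us) bv / muv, us bv / muv)].  The total vector population solves
   [Nv' = bv - muv Nv], so it relaxes exponentially to [bv / muv], and [(Sh, Ih, u)] solves
   a closed delay system in which the vector death rate [muv] is replaced by [bv / Nv],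
   an exponentially small perturbation of [muv].  With [g z = z - 1 - ln z],
   [beta = muh ys] and [k = beta / (muv us)], the functional
     [V = xs g (Sh / xs) + ys g (Ih / ys) + k us g (u / us)
          + beta int_(t - tau)^t g (Sh u / (xs us))]
   decreases along this system up to an error [O (exp (- muv t))], which is absorbed by
   adding a multiple of [exp (- muv t)].  The dissipation rate controls [(Sh - xs)^2],
   [(u - us)^2] and [(Ih / ys - u / us)^2], so Barbalat's lemma gives convergence, while
   the functional is [O (delta)] for initial data [delta]-close to [E*], which gives
   stability. *)

Lemma Rle_Rmin_iff (r a b : R) : r <= Rmin a b <-> r <= a /\ r <= b.
Proof.
  split.
  - intros H. split; (eapply Rle_trans; [exact H|]); [apply Rmin_l | apply Rmin_r].
  - intros [Ha Hb]. now apply Rmin_glb.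
Qed.

Lemma Rabs_lt_of_sq_lt (a eps : R) : 0 < eps -> a ^ 2 < eps ^ 2 -> Rabs a < eps.
Proof.
  intros Heps H. rewrite <- (Rabs_pos_eq eps) by lra.
  apply Rsqr_lt_abs_0. now rewrite !Rsqr_pow2.
Qed.

Lemma Rabs_double_mul_le (a b A B : R) : Rabs a <= A -> Rabs b <= B ->
  Rabs (2 * a * b) <= 2 * A * B.
Proof.
  intros Ha Hb. rewrite !Rabs_mult, (Rabs_pos_eq 2) by lra.
  pose proof (Rabs_pos a). pose proof (Rabs_pos b).
  apply Rmult_le_compat; nra.
Qed.

Lemma Rabs_sub_div_le (a b c d A B : R) : 0 < c -> 0 < d -> Rabs a <= A -> Rabs b <= B ->
  Rabs (a / c - b / d) <= A / c + B / d.
Proof.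
  intros Hc Hd Ha Hb. unfold Rminus. eapply Rle_trans; [apply Rabs_triang|].
  rewrite Rabs_Ropp. unfold Rdiv. rewrite !Rabs_mult, !(Rabs_pos_eq (/ _))
    by (left; apply Rinv_0_lt_compat; assumption).
  apply Rplus_le_compat; apply Rmult_le_compat_r;
    try (left; apply Rinv_0_lt_compat); assumption.
Qed.

Lemma Rabs_Rmax_sub_le (a y s : R) : Rabs (Rmax y a - Rmax s a) <= Rabs (y - s).
Proof.
  pose proof (Rle_abs (y - s)). pose proof (Rle_abs (s - y)).
  rewrite (Rabs_minus_sym s y) in *.
  unfold Rmax. destruct (Rle_dec y a), (Rle_dec s a); apply Rabs_le; lra.
Qed.

Lemma continuity_pt_of_abs (f : R -> R) (x : R) :
  (forall eps, 0 < eps -> exists d, 0 < d /\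
     forall y, Rabs (y - x) < d -> Rabs (f y - f x) < eps) ->
  continuity_pt f x.
Proof.
  intros H eps Heps. destruct (H eps Heps) as [d [Hd Hf]].
  exists d. split; [exact Hd|]. intros y [_ Hy]. exact (Hf y Hy).
Qed.

Lemma continuity_pt_abs (f : R -> R) (x : R) : continuity_pt f x ->
  forall eps, 0 < eps -> exists d, 0 < d /\
     forall y, Rabs (y - x) < d -> Rabs (f y - f x) < eps.
Proof.
  intros H eps Heps. destruct (H eps Heps) as [d [Hd Hf]].
  exists d. split; [exact Hd|]. intros y Hy.
  destruct (Req_dec x y) as [<-|Hne].
  - unfold Rminus. rewrite Rplus_opp_r, Rabs_R0. exact Heps.
  - apply (Hf y). split; [split; [exact I | exact Hne] | exact Hy].
Qed.

Lemma continuity_pt_cst (c x : R) : continuity_pt (fun _ => c) x.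
Proof. apply continuity_pt_const. intros ? ?. reflexivity. Qed.

Lemma is_derive_continuity_pt (f : R -> R) (x l : R) :
  is_derive f x l -> continuity_pt f x.
Proof.
  intros H. apply derivable_continuous_pt. exists l. now apply is_derive_Reals.
Qed.

Lemma continuity_pt_exp_lin (a x : R) : continuity_pt (fun r => exp (a * r)) x.
Proof.
  apply (is_derive_continuity_pt _ _ (a * exp (a * x))). auto_derive; [exact I | ring].
Qed.

(* [auto_derive] produces [Derive] of the eta-expanded function. *)
Lemma Derive_eta_unique (f : R -> R) (x l : R) :
  is_derive f x l -> Derive (fun y : R => f y) x = l.
Proof. apply is_derive_unique. Qed.

Lemma is_derive_sq_sub (f : R -> R) (c t df : R) : is_derive f t df ->
  is_derive (fun s => (f s - c) ^ 2) t (2 * (f t - c) * df).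
Proof.
  intros H. auto_derive; [exists df; exact H|].
  rewrite (Derive_eta_unique _ _ _ H). ring.
Qed.

Lemma is_derive_div_const (f : R -> R) (c t df : R) : is_derive f t df ->
  is_derive (fun s => f s / c) t (df / c).
Proof.
  intros H. apply (is_derive_ext (fun s => / c * f s)); [intros s; apply Rmult_comm|].
  replace (df / c) with (/ c * df) by (unfold Rdiv; ring). now apply is_derive_scal.
Qed.

Lemma mean_value (f df : R -> R) (p q : R) : p < q ->
  (forall x, p <= x <= q -> continuity_pt f x) ->
  (forall x, p < x < q -> is_derive f x (df x)) ->
  exists c, p < c < q /\ f q - f p = df c * (q - p).
Proof.
  intros Hpq Hc Hd.
  assert (Hf : forall c, p < c < q -> derivable_pt f c).
  { intros c Hc'. exists (df c). now apply is_derive_Reals, Hd. }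
  destruct (MVT f id p q Hf (fun c _ => derivable_pt_id c) Hpq Hc
              (fun c _ => derivable_continuous_pt _ _ (derivable_pt_id c))) as [c [Hcpq Hmvt]].
  exists c. split; [exact Hcpq|].
  rewrite (derive_pt_eq_0 f c (df c) (Hf c Hcpq)) in Hmvt
    by (apply is_derive_Reals, Hd, Hcpq).
  rewrite (derive_pt_eq_0 id c 1 (derivable_pt_id c)) in Hmvt
    by apply derivable_pt_lim_id.
  unfold id in Hmvt. lra.
Qed.

Lemma le_of_derive_ge0 (f df : R -> R) (p q : R) : p <= q ->
  (forall x, p <= x <= q -> continuity_pt f x) ->
  (forall x, p < x < q -> is_derive f x (df x)) ->
  (forall x, p < x < q -> 0 <= df x) -> f p <= f q.
Proof.
  intros Hpq Hc Hd Hpos. destruct (Req_dec p q) as [<-|Hne]; [lra|].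
  destruct (mean_value f df p q) as [c [Hc1 Hc2]]; auto; [lra|].
  specialize (Hpos c Hc1). nra.
Qed.

Lemma lt_of_derive_gt0 (f df : R -> R) (p q : R) : p < q ->
  (forall x, p <= x <= q -> continuity_pt f x) ->
  (forall x, p < x < q -> is_derive f x (df x)) ->
  (forall x, p < x < q -> 0 < df x) -> f p < f q.
Proof.
  intros Hpq Hc Hd Hpos.
  destruct (mean_value f df p q) as [c [Hc1 Hc2]]; auto.
  specialize (Hpos c Hc1). nra.
Qed.

Lemma ge_of_derive_le0 (f df : R -> R) (p q : R) : p <= q ->
  (forall x, p <= x <= q -> continuity_pt f x) ->
  (forall x, p < x < q -> is_derive f x (df x)) ->
  (forall x, p < x < q -> df x <= 0) -> f q <= f p.
Proof.
  intros Hpq Hc Hd Hneg.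
  apply (le_of_derive_ge0 (fun x => - f x) (fun x => - df x) p q) in Hpq; auto.
  - lra.
  - intros x Hx. apply continuity_pt_opp, Hc, Hx.
  - intros x Hx. apply (is_derive_opp f), Hd, Hx.
  - intros x Hx. specialize (Hneg x Hx). lra.
Qed.

Lemma lipschitz_of_derive_bound (h dh : R -> R) (T0 L : R) :
  (forall t, T0 < t -> is_derive h t (dh t) /\ Rabs (dh t) <= L) ->
  forall s t, T0 < s -> T0 < t -> Rabs (h s - h t) <= L * Rabs (s - t).
Proof.
  intros Hd.
  assert (Hlt : forall s t, T0 < s -> s < t -> Rabs (h s - h t) <= L * Rabs (s - t)).
  { intros s t Hs Hst.
    destruct (mean_value h dh s t Hst) as [c [Hc Hmvt]].
    - intros x Hx. apply (is_derive_continuity_pt _ _ (dh x)), Hd. lra.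
    - intros x Hx. apply Hd. lra.
    - rewrite Rabs_minus_sym, Hmvt, Rabs_mult, (Rabs_minus_sym s t).
      apply Rmult_le_compat_r; [apply Rabs_pos | apply Hd; lra]. }
  intros s t Hs Ht. destruct (Rtotal_order s t) as [H|[<-|H]].
  - now apply Hlt.
  - unfold Rminus. rewrite !Rplus_opp_r, Rabs_R0, Rmult_0_r. lra.
  - rewrite Rabs_minus_sym, (Rabs_minus_sym s t). now apply Hlt.
Qed.

Lemma real_induction (P : R -> Prop) :
  (forall s, 0 <= s -> (forall r, 0 <= r < s -> P r) ->
     exists eta, 0 < eta /\ forall r, s <= r < s + eta -> P r) ->
  forall r, 0 <= r -> P r.
Proof.
  intros Hstep r0 Hr0. apply NNPP. intros HnP.
  set (E := fun s => 0 <= s <= r0 /\ forall r, 0 <= r < s -> P r).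
  assert (HE0 : E 0) by (split; [lra | intros r Hr; lra]).
  destruct (completeness E) as [l [Hub Hlub]].
  { exists r0. intros s [Hs _]. lra. }
  { now exists 0. }
  assert (H0l : 0 <= l) by now apply Hub.
  assert (Hbelow : forall r, 0 <= r < l -> P r).
  { intros r Hr. apply NNPP. intros HnPr.
    assert (l <= r); [|lra].
    apply Hlub. intros s [_ Hs]. destruct (Rle_lt_dec s r) as [|Hrs]; [easy|].
    exfalso. apply HnPr, Hs. lra. }
  destruct (Hstep l H0l Hbelow) as [eta [Heta Hnext]].
  destruct (Rlt_le_dec r0 (l + eta)) as [Hlt|Hge].
  - apply HnP, Hnext. split; [|exact Hlt].
    apply Hlub. intros s [Hs _]. lra.
  - assert (HE : E (l + eta / 2)).
    { split; [lra|]. intros r Hr.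
      destruct (Rlt_le_dec r l); [apply Hbelow | apply Hnext]; lra. }
    specialize (Hub _ HE). lra.
Qed.

Lemma ball_Rabs (x e y : R) : ball x e y <-> Rabs (y - x) < e.
Proof. reflexivity. Qed.

Definition cont_from (a : R) (f : R -> R) (s : R) : Prop :=
  forall eps, 0 < eps -> exists d, 0 < d /\
    forall y, a <= y -> Rabs (y - s) < d -> Rabs (f y - f s) < eps.

(* Solutions are only known on [-tau, +oo); freezing them at [a] to the left of [a]
   gives functions continuous on all of [R], as the Riemann-integral and mean-value
   lemmas require. *)
Definition extend_left (a : R) (f : R -> R) (r : R) : R := f (Rmax r a).

Lemma extend_left_eq (a : R) (f : R -> R) (r : R) : a <= r -> extend_left a f r = f r.
Proof. intros Har. unfold extend_left. now rewrite Rmax_left. Qed.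

Lemma continuity_pt_extend_left (a0 a : R) (f : R -> R) : a0 <= a ->
  (forall s, a0 <= s -> cont_from a0 f s) ->
  forall s, continuity_pt (extend_left a f) s.
Proof.
  intros Ha Hf s. apply continuity_pt_of_abs. intros eps Heps.
  assert (Hm : a0 <= Rmax s a) by (eapply Rle_trans; [exact Ha | apply Rmax_r]).
  destruct (Hf _ Hm eps Heps) as [d [Hd Hcont]].
  exists d. split; [exact Hd|]. intros y Hy. apply Hcont.
  - eapply Rle_trans; [exact Ha | apply Rmax_r].
  - eapply Rle_lt_trans; [apply Rabs_Rmax_sub_le | exact Hy].
Qed.

Lemma is_derive_extend_left (a : R) (f : R -> R) (t l : R) : a < t ->
  is_derive f t l -> is_derive (extend_left a f) t l.
Proof.
  intros Hat H. apply (is_derive_ext_loc f); [|exact H].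
  assert (Hd : 0 < t - a) by lra. exists (mkposreal _ Hd). intros y Hy.
  change (Rabs (y - t) < t - a) in Hy. apply Rabs_def2 in Hy.
  symmetry. apply extend_left_eq. lra.
Qed.

Lemma cont_from_of_continuity_pt (a : R) (f : R -> R) (s : R) :
  continuity_pt f s -> cont_from a f s.
Proof.
  intros H eps Heps. destruct (continuity_pt_abs f s H eps Heps) as [d [Hd Hf]].
  exists d. split; [exact Hd|]. intros y _. apply Hf.
Qed.

Lemma cont_from_glue (a b : R) (f : R -> R) :
  (forall t, a <= t <= b ->
     filterlim f (within (fun s => a <= s <= b) (locally t)) (locally (f t))) ->
  filterlim f (at_right b) (locally (f b)) ->
  (forall t, b < t -> continuity_pt f t) ->
  forall s, a <= s -> cont_from a f s.
Proof.
  intros Hin Hright Hout s Has.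
  destruct (Rlt_le_dec b s) as [Hbs|Hsb].
  { now apply cont_from_of_continuity_pt, Hout. }
  intros eps Heps.
  specialize (Hin s (conj Has Hsb)).
  apply (filterlim_locally (F := within _ _)) with (eps := mkposreal eps Heps) in Hin.
  destruct Hin as [d1 Hd1].
  destruct (Req_dec s b) as [->|Hne].
  - apply (filterlim_locally (F := at_right b)) with (eps := mkposreal eps Heps) in Hright.
    destruct Hright as [d2 Hd2].
    exists (Rmin d1 d2). split; [apply Rmin_pos; apply cond_pos|].
    intros y Hay Hy.
    pose proof (Rmin_l d1 d2). pose proof (Rmin_r d1 d2).
    destruct (Rle_lt_dec y b) as [Hyb|Hby].
    + apply (Hd1 y); [apply ball_Rabs; lra | lra].
    + apply (Hd2 y); [apply ball_Rabs; lra | exact Hby].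
  - exists (Rmin d1 (b - s)). split; [apply Rmin_pos; [apply cond_pos | lra]|].
    intros y Hay Hy.
    pose proof (Rmin_l d1 (b - s)). pose proof (Rmin_r d1 (b - s)).
    apply (Hd1 y); [apply ball_Rabs; lra|].
    apply Rabs_def2 in Hy. lra.
Qed.

Section WindowIntegral.

Variable g : R -> R.
Hypothesis g_cont : forall x, continuity_pt g x.

Lemma ex_RInt_continuous_everywhere (a b : R) : ex_RInt g a b.
Proof.
  apply (ex_RInt_continuous (V := R_CompleteNormedModule)).
  intros z _. now apply continuity_pt_filterlim.
Qed.

Lemma is_derive_RInt_upper (c t : R) : is_derive (fun b => RInt g c b) t (g t).
Proof.
  apply (is_derive_RInt g (fun b => RInt g c b) c t).
  - apply filter_forall. intros b. apply (RInt_correct g c b), ex_RInt_continuous_everywhere.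
  - now apply continuity_pt_filterlim.
Qed.

Lemma is_derive_RInt_window (tau t : R) :
  is_derive (fun s => RInt g (s - tau) s) t (g t - g (t - tau)).
Proof.
  apply is_derive_ext with (f := fun s => RInt g 0 s - RInt g 0 (s - tau)).
  { intros s. rewrite <- (RInt_Chasles g 0 (s - tau) s)
      by apply ex_RInt_continuous_everywhere.
    unfold plus; simpl. ring. }
  apply (is_derive_minus (fun s => RInt g 0 s) (fun s => RInt g 0 (s - tau))).
  - apply is_derive_RInt_upper.
  - replace (g (t - tau)) with (scal 1 (g (t - tau)))
      by (unfold scal; simpl; unfold mult; simpl; ring).
    apply (is_derive_comp (fun s => RInt g 0 s) (fun s => s - tau)).
    + apply is_derive_RInt_upper.
    + auto_derive; [exact I | ring].
Qed.

Lemma RInt_le_const (a b c : R) : a <= b ->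
  (forall x, a < x < b -> g x <= c) -> RInt g a b <= (b - a) * c.
Proof.
  intros Hab H.
  replace ((b - a) * c) with (RInt (fun _ => c) a b)
    by (rewrite RInt_const; reflexivity).
  apply RInt_le; auto.
  - apply ex_RInt_continuous_everywhere.
  - apply ex_RInt_const.
Qed.

End WindowIntegral.

Lemma is_lim_of_sq_vanishes (f : R -> R) (l : R) :
  (forall eps, 0 < eps -> exists M, forall t, M <= t -> (f t - l) ^ 2 < eps) ->
  is_lim f p_infty l.
Proof.
  intros H. apply is_lim_spec. intros eps.
  destruct (H (eps ^ 2)) as [M HM]; [apply pow_lt, cond_pos|].
  exists M. intros t Ht. apply Rabs_lt_of_sq_lt; [apply cond_pos | apply HM; lra].
Qed.

Lemma is_lim_exp_neg (mu : R) : 0 < mu -> is_lim (fun t => exp (- mu * t)) p_infty 0.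
Proof.
  intros Hmu. apply is_lim_spec. intros eps.
  exists (- ln eps / mu). intros t Ht.
  rewrite Rminus_0_r, Rabs_pos_eq by (left; apply exp_pos).
  rewrite <- (exp_ln eps) by apply cond_pos. apply exp_increasing.
  apply (Rmult_lt_compat_l mu) in Ht; [|exact Hmu].
  replace (mu * (- ln eps / mu)) with (- ln eps) in Ht by (field; lra). lra.
Qed.

Lemma is_lim_relaxation (Ns N0 mu : R) : 0 < mu ->
  is_lim (fun t => Ns + (N0 - Ns) * exp (- mu * t)) p_infty Ns.
Proof.
  intros Hmu.
  apply (is_lim_plus _ _ _ Ns 0); [apply is_lim_const | |].
  - replace (Finite 0) with (Rbar_mult (N0 - Ns) 0) by (simpl; now rewrite Rmult_0_r).
    apply is_lim_scal_l, is_lim_exp_neg, Hmu.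
  - unfold is_Rbar_plus. simpl. now rewrite Rplus_0_r.
Qed.

(* Barbalat's lemma, in the integrated form suited to Lyapunov functionals. *)
Lemma barbalat (Phi h : R -> R) (T L : R) : 0 < L ->
  (forall t, T <= t -> 0 <= Phi t) ->
  (forall t, T <= t -> 0 <= h t) ->
  (forall p q c, T <= p <= q -> (forall s, p <= s <= q -> c <= h s) ->
     Phi q <= Phi p - c * (q - p)) ->
  (forall s t, T <= s -> T <= t -> Rabs (h s - h t) <= L * Rabs (s - t)) ->
  forall eps, 0 < eps -> exists M, forall t, M <= t -> h t < eps.
Proof.
  intros HL HPhi0 Hh0 Hdecr Hlip eps Heps.
  apply NNPP. intros Hnot.
  assert (Hoften : forall M, exists t, M <= t /\ eps <= h t).
  { intros M. apply NNPP. intros HM. apply Hnot. exists M. intros t Ht.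
    apply Rnot_le_lt. intros Hle. apply HM. now exists t. }
  set (d := eps / (2 * L)).
  assert (Hd : 0 < d) by (unfold d; apply Rdiv_lt_0_compat; lra).
  assert (HLd : L * d = eps / 2) by (unfold d; field; lra).
  (* each visit of [h] above [eps] costs [Phi] at least [eps / 2 * d] *)
  assert (Hdrop : forall n : nat, exists t, T <= t /\ Phi t <= Phi T - INR n * (eps / 2 * d)).
  { induction n as [|n [t [Ht HPt]]].
    - exists T. simpl. lra.
    - destruct (Hoften t) as [t' [Htt' Hht']].
      assert (H1 : Phi t' <= Phi t - 0 * (t' - t))
        by (apply Hdecr; [lra | intros s Hs; apply Hh0; lra]).
      assert (H2 : Phi (t' + d) <= Phi t' - eps / 2 * (t' + d - t')).
      { apply Hdecr; [lra|]. intros s Hs.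
        specialize (Hlip s t' ltac:(lra) ltac:(lra)).
        rewrite (Rabs_right (s - t')) in Hlip by lra.
        pose proof (Rle_abs (h t' - h s)). rewrite Rabs_minus_sym in Hlip.
        assert (L * (s - t') <= L * d) by (apply Rmult_le_compat_l; lra). lra. }
      exists (t' + d). split; [lra|]. rewrite S_INR. nra. }
  assert (Hcd : 0 < eps / 2 * d) by nra.
  set (n := Z.to_nat (up (Phi T / (eps / 2 * d)))).
  destruct (Hdrop n) as [t [Ht HPt]].
  assert (HPT : 0 <= Phi T / (eps / 2 * d))
    by (apply Rdiv_le_0_compat; [apply HPhi0; lra | lra]).
  destruct (archimed (Phi T / (eps / 2 * d))) as [Hup _].
  assert (Hn : Phi T / (eps / 2 * d) < INR n).
  { unfold n. rewrite INR_IZR_INZ, Z2Nat.id; [lra|]. apply le_IZR. lra. }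
  apply (Rmult_lt_compat_r (eps / 2 * d)) in Hn; [|lra].
  unfold Rdiv in Hn. rewrite Rmult_assoc, Rinv_l, Rmult_1_r in Hn by lra.
  specialize (HPhi0 t Ht). lra.
Qed.

Lemma dissipation_vanishes (Phi W h dh : R -> R) (T T0 kap L : R) :
  0 < kap -> T <= T0 ->
  (forall t, T <= t -> 0 <= Phi t) ->
  (forall p q c, T <= p <= q -> (forall s, p <= s <= q -> c <= W s) ->
     Phi q <= Phi p - c * (q - p)) ->
  (forall s, T <= s -> 0 <= h s /\ kap * h s <= W s) ->
  (forall t, T0 < t -> is_derive h t (dh t) /\ Rabs (dh t) <= L) ->
  forall eps, 0 < eps -> exists M, forall t, M <= t -> h t < eps.
Proof.
  intros Hkap HT HPhi0 Hdecr Hh Hdh eps Heps.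
  assert (HL : 0 <= L).
  { destruct (Hdh (T0 + 1)) as [_ H]; [lra|]. pose proof (Rabs_pos (dh (T0 + 1))). lra. }
  destruct (barbalat Phi (fun s => kap * h s) (T0 + 1) (kap * (L + 1))) with (eps := kap * eps)
    as [M HM].
  - nra.
  - intros t Ht. apply HPhi0. lra.
  - intros t Ht. apply Rmult_le_pos; [lra | apply Hh; lra].
  - intros p q c Hpq Hc. apply Hdecr; [lra|]. intros s Hs.
    eapply Rle_trans; [apply Hc, Hs | apply Hh; lra].
  - intros s t Hs Ht.
    apply (lipschitz_of_derive_bound (fun s => kap * h s) (fun s => kap * dh s) T0);
      [|lra|lra].
    intros r Hr. destruct (Hdh r Hr) as [Hd Hb]. split.
    + now apply is_derive_scal.
    + rewrite Rabs_mult, (Rabs_right kap) by lra. apply Rmult_le_compat_l; lra.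
  - nra.
  - exists M. intros t Ht. specialize (HM t Ht). simpl in HM. nra.
Qed.

(** * The Volterra function *)

Definition volterra (z : R) : R := z - 1 - ln z.

Lemma ln_le_sub1 (z : R) : 0 < z -> ln z <= z - 1.
Proof. intros Hz. pose proof (exp_ineq1_le (ln z)). rewrite exp_ln in H by exact Hz. lra. Qed.

Lemma volterra_ge0 (z : R) : 0 < z -> 0 <= volterra z.
Proof. intros Hz. unfold volterra. pose proof (ln_le_sub1 z Hz). lra. Qed.

Lemma volterra_le_sq_div (z : R) : 0 < z -> volterra z <= (z - 1) ^ 2 / z.
Proof.
  intros Hz. unfold volterra.
  pose proof (ln_le_sub1 (/ z) (Rinv_0_lt_compat _ Hz)) as H.
  rewrite ln_Rinv in H by exact Hz.
  replace ((z - 1) ^ 2 / z) with (z - 2 + / z) by (field; lra). lra.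
Qed.

Lemma volterra_le_near1 (z : R) : Rabs (z - 1) <= 1 / 2 -> volterra z <= 2 * (z - 1) ^ 2.
Proof.
  intros H. apply Rabs_le_between in H.
  eapply Rle_trans; [apply volterra_le_sq_div; lra|].
  apply (Rmult_le_reg_r z); [lra|].
  replace ((z - 1) ^ 2 / z * z) with ((z - 1) ^ 2) by (field; lra).
  pose proof (pow2_ge_0 (z - 1)). nra.
Qed.

Lemma volterra_le_lower (z M : R) : 0 < z -> volterra z <= M -> exp (- (1 + M)) <= z.
Proof.
  intros Hz HM. unfold volterra in HM. rewrite <- (exp_ln z) by exact Hz.
  destruct (Req_dec (- (1 + M)) (ln z)) as [->|Hne]; [lra|].
  left. apply exp_increasing. lra.
Qed.

(* [ln z = 2 ln (sqrt z) <= 2 (sqrt z - 1)], and [(sqrt z - 2)^2 >= 0] finishes. *)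
Lemma volterra_le_upper (z M : R) : 0 < z -> volterra z <= M -> z <= 2 * (M + 1).
Proof.
  intros Hz HM. unfold volterra in HM.
  assert (Hs : 0 < sqrt z) by (apply sqrt_lt_R0, Hz).
  assert (Hzz : sqrt z * sqrt z = z) by (apply sqrt_sqrt; lra).
  assert (Hl : ln z = 2 * ln (sqrt z)) by (rewrite <- Hzz at 1; rewrite ln_mult by exact Hs; ring).
  pose proof (ln_le_sub1 (sqrt z) Hs). pose proof (pow2_ge_0 (sqrt z - 2)). nra.
Qed.

Lemma volterra_ge_quad (z q : R) : 0 < z -> z <= q -> 1 <= q ->
  (z - 1) ^ 2 / (2 * q ^ 2) <= volterra z.
Proof.
  intros Hz Hzq Hq.
  set (H := fun s => volterra s - (s - 1) ^ 2 / (2 * q ^ 2)).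
  set (dH := fun s => (s - 1) * (q ^ 2 - s) / (s * q ^ 2)).
  assert (Hq2 : 1 <= q ^ 2) by nra.
  assert (Hqq : q <= q ^ 2) by nra.
  assert (Hd : forall s, 0 < s -> is_derive H s (dH s)).
  { intros s Hs. unfold H, dH, volterra. auto_derive; [lra | field; lra]. }
  assert (Hc : forall s, 0 < s -> continuity_pt H s)
    by (intros s Hs; apply (is_derive_continuity_pt _ _ _ (Hd s Hs))).
  assert (H1 : H 1 = 0) by (unfold H, volterra; rewrite ln_1; field; lra).
  enough (0 <= H z) by (unfold H in *; lra).
  rewrite <- H1. destruct (Rle_lt_dec z 1) as [Hz1|Hz1].
  - apply (ge_of_derive_le0 H dH z 1); auto.
    + intros s Hs. apply Hc. lra.
    + intros s Hs. apply Hd. lra.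
    + intros s Hs. unfold dH. apply Rmult_le_0_r; [nra|].
      left. apply Rinv_0_lt_compat. nra.
  - apply (le_of_derive_ge0 H dH 1 z); [lra| | |].
    + intros s Hs. apply Hc. lra.
    + intros s Hs. apply Hd. lra.
    + intros s Hs. unfold dH. apply Rmult_le_pos; [nra|].
      left. apply Rinv_0_lt_compat. nra.
Qed.

Section Scaled.

Variables c z : R.
Hypothesis c_pos : 0 < c.
Hypothesis z_pos : 0 < z.

Lemma volterra_scaled_ge0 : 0 <= c * volterra (z / c).
Proof. apply Rmult_le_pos; [lra | apply volterra_ge0, Rdiv_lt_0_compat; lra]. Qed.

Lemma volterra_scaled_le (M : R) : c * volterra (z / c) <= M -> volterra (z / c) <= M / c.
Proof.
  intros H. apply (Rmult_le_reg_l c); [exact c_pos|].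
  replace (c * (M / c)) with M by (field; lra). exact H.
Qed.

Lemma volterra_scaled_bounds (M : R) : c * volterra (z / c) <= M ->
  c * exp (- (1 + M / c)) <= z /\ z <= c * (2 * (M / c + 1)).
Proof.
  intros H. apply volterra_scaled_le in H.
  assert (Hzc : 0 < z / c) by (apply Rdiv_lt_0_compat; lra).
  replace z with (c * (z / c)) by (field; lra).
  split; apply Rmult_le_compat_l; try lra.
  - now apply volterra_le_lower.
  - now apply volterra_le_upper.
Qed.

Lemma volterra_scaled_sq_le (M : R) : c * volterra (z / c) <= M -> M <= c / 4 ->
  (z - c) ^ 2 <= 18 * c * M.
Proof.
  intros H HM. apply volterra_scaled_le in H.
  assert (Hzc : 0 < z / c) by (apply Rdiv_lt_0_compat; lra).
  assert (HMc : M / c <= 1 / 4) by (apply (Rmult_le_reg_l c); [lra|]; field_simplify; lra).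
  pose proof (volterra_le_upper _ _ Hzc H).
  pose proof (volterra_ge_quad (z / c) 3 Hzc ltac:(lra) ltac:(lra)).
  replace ((z - c) ^ 2) with (c ^ 2 * (z / c - 1) ^ 2) by (field; lra).
  replace (18 * c * M) with (c ^ 2 * (18 * (M / c))) by (field; lra).
  apply Rmult_le_compat_l; [apply pow2_ge_0 | lra].
Qed.

End Scaled.

Lemma volterra_scaled_small (c eps : R) : 0 < c -> 0 < eps -> exists eta, 0 < eta /\
  forall z, 0 < z -> c * volterra (z / c) <= eta -> Rabs (z - c) < eps.
Proof.
  intros Hc Heps. set (eta := Rmin (c / 4) (eps ^ 2 / (36 * c))).
  assert (Heps2 : 0 < eps ^ 2) by (apply pow_lt, Heps).
  exists eta. split; [apply Rmin_pos; [lra | apply Rdiv_lt_0_compat; lra]|].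
  intros z Hz H. apply Rabs_lt_of_sq_lt; [exact Heps|].
  pose proof (volterra_scaled_sq_le c z Hc Hz eta H (Rmin_l _ _)).
  assert (18 * c * eta <= 18 * c * (eps ^ 2 / (36 * c)))
    by (apply Rmult_le_compat_l; [lra | apply Rmin_r]).
  replace (18 * c * (eps ^ 2 / (36 * c))) with (eps ^ 2 / 2) in * by (field; lra). lra.
Qed.

Lemma volterra_scaled_le_near (c z d : R) : 0 < c -> Rabs (z - c) <= d -> d <= c / 2 ->
  c * volterra (z / c) <= 2 * d ^ 2 / c.
Proof.
  intros Hc H Hd.
  assert (Hz : Rabs (z / c - 1) <= d / c).
  { replace (z / c - 1) with ((z - c) / c) by (field; lra).
    rewrite Rabs_div, (Rabs_right c) by lra.
    apply Rmult_le_compat_r; [left; apply Rinv_0_lt_compat|]; lra. }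
  assert (Hdc : d / c <= 1 / 2) by (apply (Rmult_le_reg_l c); [lra|]; field_simplify; lra).
  pose proof (volterra_le_near1 (z / c) ltac:(lra)).
  assert ((z / c - 1) ^ 2 <= (d / c) ^ 2).
  { rewrite <- !Rsqr_pow2, (Rsqr_abs (z / c - 1)).
    apply Rsqr_incr_1; [exact Hz | apply Rabs_pos | pose proof (Rabs_pos (z / c - 1)); lra]. }
  apply (Rle_trans _ (c * (2 * (d / c) ^ 2))); [apply Rmult_le_compat_l; lra|].
  right. field. lra.
Qed.

Lemma is_derive_volterra_scaled (f : R -> R) (c t df : R) : 0 < c -> 0 < f t ->
  is_derive f t df -> is_derive (fun s => c * volterra (f s / c)) t ((1 - c / f t) * df).
Proof.
  intros Hc Hf H. unfold volterra. auto_derive.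
  - repeat split; try (exists df; exact H). apply Rdiv_lt_0_compat; assumption.
  - rewrite (Derive_eta_unique f t df H). field. split; lra.
Qed.

Lemma continuity_pt_volterra_comp (f : R -> R) (s : R) : continuity_pt f s -> 0 < f s ->
  continuity_pt (fun r => volterra (f r)) s.
Proof.
  intros Hf Hp. unfold volterra.
  apply continuity_pt_minus; [apply continuity_pt_minus; [exact Hf | apply continuity_pt_cst]|].
  apply (continuity_pt_comp f ln); [exact Hf|].
  apply (is_derive_continuity_pt _ _ (/ f s)). now apply is_derive_Reals, derivable_pt_lim_ln.
Qed.

Lemma volterra_ratio_ge (c Y U q : R) : 0 < c -> 0 < Y -> 0 < U -> c * U <= 1 ->
  Y / U <= q -> 1 <= q -> c ^ 2 * (Y - U) ^ 2 / (2 * q ^ 2) <= volterra (Y / U).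
Proof.
  intros Hc HY HU HcU Hq Hq1.
  assert (Hq2 : 0 < 2 * q ^ 2) by (apply Rmult_lt_0_compat; [lra | apply pow_lt; lra]).
  eapply Rle_trans;
    [|apply volterra_ge_quad; [apply Rdiv_lt_0_compat; assumption | exact Hq | exact Hq1]].
  apply Rmult_le_compat_r; [left; apply Rinv_0_lt_compat, Hq2|].
  replace ((Y / U - 1) ^ 2) with ((Y - U) ^ 2 / U ^ 2) by (field; lra).
  apply (Rmult_le_reg_r (U ^ 2)); [apply pow_lt, HU|].
  replace ((Y - U) ^ 2 / U ^ 2 * U ^ 2) with ((Y - U) ^ 2) by (field; lra).
  assert (c ^ 2 * U ^ 2 <= 1).
  { replace (c ^ 2 * U ^ 2) with ((c * U) * (c * U)) by ring.
    assert (0 < c * U) by nra. nra. } pose proof (pow2_ge_0 (Y - U)). nra.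
Qed.

(** * The reduced system and its Lyapunov functional *)

(* The system in the variables [x = Sh], [y = Ih], [u = Iv / Nv] for [t > T]: [m = bv / Nv]
   replaces the vector death rate [muv] and converges to it exponentially fast. *)
Definition reduced_system (bh muh Cvh Chv muv tau D T : R) (x y u m : R -> R) : Prop :=
  (forall s, continuity_pt x s /\ continuity_pt y s /\ continuity_pt u s) /\
  (forall s, 0 < x s /\ 0 < y s /\ 0 < u s /\ u s < 1) /\
  (forall t, T < t ->
     is_derive x t (bh - Cvh * u t * x t - muh * x t) /\
     is_derive y t (Cvh * u (t - tau) * x (t - tau) - muh * y t) /\
     is_derive u t (Chv * y t * (1 - u t) - m t * u t) /\
     Rabs (m t - muv) <= D * exp (- muv * t)).

Lemma host_rate_bound (bh Cvh muh X U xu : R) : 0 <= bh -> 0 < Cvh -> 0 < muh ->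
  0 < X <= xu -> 0 < U < 1 -> Rabs (bh - Cvh * U * X - muh * X) <= bh + Cvh * xu + muh * xu.
Proof. intros. assert (0 < U * X <= X) by (split; nra). apply Rabs_le. nra. Qed.

Lemma infection_rate_bound (Cvh muh Ud Xd Y xu yu : R) : 0 < Cvh -> 0 < muh ->
  0 < Xd <= xu -> 0 < Ud < 1 -> 0 < Y <= yu ->
  Rabs (Cvh * Ud * Xd - muh * Y) <= Cvh * xu + muh * yu.
Proof. intros. assert (0 < Ud * Xd <= xu) by (split; nra). apply Rabs_le. nra. Qed.

Lemma vector_rate_bound (Chv Y U M yu mB : R) : 0 < Chv -> 0 < Y <= yu -> 0 < U < 1 ->
  0 <= M <= mB -> Rabs (Chv * Y * (1 - U) - M * U) <= Chv * yu + mB.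
Proof.
  intros. assert (0 <= Y * (1 - U) <= Y) by (split; nra).
  assert (0 <= M * U <= mB) by (split; nra). apply Rabs_le. nra.
Qed.

Section Lyapunov.

Variables bh muh Cvh Chv muv xs ys us : R.
Hypotheses (muh_pos : 0 < muh) (muv_pos : 0 < muv)
  (xs_pos : 0 < xs) (ys_pos : 0 < ys) (us_pos : 0 < us) (us_lt1 : us < 1).
Hypotheses (eq_x : bh = Cvh * us * xs + muh * xs) (eq_y : Cvh * us * xs = muh * ys)
  (eq_u : Chv * ys * (1 - us) = muv * us).

Let beta := muh * ys.
Let k := muh * ys / (muv * us).

Let beta_pos : 0 < beta.
Proof. unfold beta. nra. Qed.

Let k_pos : 0 < k.
Proof. unfold k. apply Rdiv_lt_0_compat; nra. Qed.

Let Chv_pos : 0 < Chv.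
Proof.
  assert (0 < ys * (1 - us)) by nra.
  destruct (Rlt_le_dec 0 Chv) as [|Hle]; [assumption|].
  assert (Chv * (ys * (1 - us)) <= 0) by nra. nra.
Qed.

Let Cvh_pos : 0 < Cvh.
Proof.
  assert (0 < us * xs) by nra.
  destruct (Rlt_le_dec 0 Cvh) as [|Hle]; [assumption|].
  assert (Cvh * (us * xs) <= 0) by nra. nra.
Qed.

Definition lyap_V (tau : R) (x y u : R -> R) (t : R) : R :=
  xs * volterra (x t / xs) + ys * volterra (y t / ys) + k * (us * volterra (u t / us))
  + beta * RInt (fun s => volterra (x s * u s / (xs * us))) (t - tau) t.

(* The exponential term absorbs the perturbation [m - muv]. *)
Definition lyap_Phi (tau D : R) (x y u : R -> R) (t : R) : R :=
  lyap_V tau x y u t + k * D / muv * exp (- muv * t).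

Definition lyap_W (x y u : R -> R) (s : R) : R :=
  muh * (x s - xs) ^ 2 / x s + k * Chv * y s * (u s - us) ^ 2 / u s
  + beta * volterra ((y s / ys) / (u s / us)).

(* The derivative of [lyap_V] along the reduced system, with [X = x t], [Xd = x (t - tau)]
   etc.; the weights [beta] and [k] are exactly those that make the cross terms cancel. *)
Lemma lyap_identity (X Y U Xd Ud M : R) :
  0 < X -> 0 < Y -> 0 < U -> 0 < Xd -> 0 < Ud ->
  (1 - xs / X) * (bh - Cvh * U * X - muh * X) + (1 - ys / Y) * (Cvh * Ud * Xd - muh * Y)
  + k * ((1 - us / U) * (Chv * Y * (1 - U) - M * U))
  + beta * (volterra (X * U / (xs * us)) - volterra (Xd * Ud / (xs * us)))
  = - muh * (X - xs) ^ 2 / X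
    - beta * (volterra (xs / X) + volterra ((Xd * Ud / (xs * us)) / (Y / ys))
              + volterra ((Y / ys) / (U / us)))
    - k * Chv * Y * (U - us) ^ 2 / U - k * (M - muv) * (U - us).
Proof.
  intros HX HY HU HXd HUd. unfold volterra, beta, k.
  assert (Hxu : 0 < xs * us) by nra.
  assert (HXU : 0 < X * U) by nra. assert (HXUd : 0 < Xd * Ud) by nra.
  assert (HY' : 0 < Y / ys) by (apply Rdiv_lt_0_compat; lra).
  assert (HU' : 0 < U / us) by (apply Rdiv_lt_0_compat; lra).
  assert (Hd : 0 < Xd * Ud / (xs * us)) by (apply Rdiv_lt_0_compat; lra).
  rewrite (ln_div (Xd * Ud / (xs * us))), (ln_div (Y / ys)), (ln_div xs X) by assumption.
  rewrite (ln_div (X * U)), (ln_div (Xd * Ud)), (ln_div Y), (ln_div U), !ln_mult by assumption.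
  assert (Hchv : Chv = muv * us / (ys * (1 - us))) by (field_simplify_eq; nra).
  assert (Hcvh : Cvh = muh * ys / (us * xs)) by (field_simplify_eq; nra).
  rewrite eq_x, Hcvh, Hchv. field. repeat split; lra.
Qed.

Variables tau D T : R.
Hypotheses (tau_ge0 : 0 <= tau) (D_ge0 : 0 <= D).
Variables x y u m : R -> R.
Hypothesis red : reduced_system bh muh Cvh Chv muv tau D T x y u m.

Let red_cont (s : R) : continuity_pt x s /\ continuity_pt y s /\ continuity_pt u s.
Proof. apply red. Qed.

Let red_pos (s : R) : 0 < x s /\ 0 < y s /\ 0 < u s /\ u s < 1.
Proof. apply red. Qed.

Let red_derive (t : R) : T < t ->
  is_derive x t (bh - Cvh * u t * x t - muh * x t) /\
  is_derive y t (Cvh * u (t - tau) * x (t - tau) - muh * y t) /\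
  is_derive u t (Chv * y t * (1 - u t) - m t * u t) /\
  Rabs (m t - muv) <= D * exp (- muv * t).
Proof. apply red. Qed.

Lemma lyap_integrand_continuous (s : R) :
  continuity_pt (fun r => volterra (x r * u r / (xs * us))) s.
Proof.
  destruct (red_cont s) as [Hx [_ Hu]]. destruct (red_pos s) as [Px [_ [Pu _]]].
  apply continuity_pt_volterra_comp.
  - apply continuity_pt_div; [apply continuity_pt_mult; assumption | apply continuity_pt_cst | nra].
  - apply Rdiv_lt_0_compat; nra.
Qed.

Let volterra_term_cont (f : R -> R) (c s : R) : 0 < c -> (forall r, continuity_pt f r) ->
  (forall r, 0 < f r) -> continuity_pt (fun r => c * volterra (f r / c)) s.
Proof.
  intros Hc Hf Hpos. apply continuity_pt_mult; [apply continuity_pt_cst|].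
  apply continuity_pt_volterra_comp.
  - apply continuity_pt_div; [apply Hf | apply continuity_pt_cst | lra].
  - apply Rdiv_lt_0_compat; [apply Hpos | exact Hc].
Qed.

Lemma lyap_Phi_continuous (s : R) : continuity_pt (lyap_Phi tau D x y u) s.
Proof.
  unfold lyap_Phi, lyap_V.
  repeat apply continuity_pt_plus.
  - apply volterra_term_cont; [lra | apply red_cont | apply red_pos].
  - apply volterra_term_cont; [lra | apply red_cont | apply red_pos].
  - apply continuity_pt_mult; [apply continuity_pt_cst|].
    apply volterra_term_cont; [lra | apply red_cont | apply red_pos].
  - apply continuity_pt_mult; [apply continuity_pt_cst|].
    exact (is_derive_continuity_pt _ _ _ (is_derive_RInt_window _ lyap_integrand_continuous tau s)).
  - apply continuity_pt_mult; [apply continuity_pt_cst | apply continuity_pt_exp_lin].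
Qed.

Lemma lyap_W_terms_nonneg (s : R) :
  0 <= muh * (x s - xs) ^ 2 / x s /\ 0 <= k * Chv * y s * (u s - us) ^ 2 / u s /\
  0 <= beta * volterra ((y s / ys) / (u s / us)).
Proof.
  destruct (red_pos s) as [Px [Py [Pu Pu1]]]. pose proof k_pos. pose proof Chv_pos.
  repeat split.
  - apply Rdiv_le_0_compat; [apply Rmult_le_pos; [lra | apply pow2_ge_0] | lra].
  - apply Rdiv_le_0_compat; [|lra]. apply Rmult_le_pos; [|apply pow2_ge_0].
    apply Rmult_le_pos; [apply Rmult_le_pos|]; lra.
  - apply Rmult_le_pos; [pose proof beta_pos; lra|].
    apply volterra_ge0. apply Rdiv_lt_0_compat; apply Rdiv_lt_0_compat; lra.
Qed.

Lemma lyap_W_nonneg (s : R) : 0 <= lyap_W x y u s.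
Proof. pose proof (lyap_W_terms_nonneg s). unfold lyap_W. lra. Qed.

Lemma lyap_Phi_derive (t : R) : T < t ->
  exists d, is_derive (lyap_Phi tau D x y u) t d /\ d <= - lyap_W x y u t.
Proof.
  intros Ht. destruct (red_derive t Ht) as [Dx [Dy [Du Hm]]].
  destruct (red_pos t) as [Px [Py [Pu Pu1]]].
  destruct (red_pos (t - tau)) as [Pxd [_ [Pud _]]].
  eexists. split.
  { unfold lyap_Phi, lyap_V.
    apply (is_derive_plus (V := R_NormedModule));
      [apply (is_derive_plus (V := R_NormedModule));
        [apply (is_derive_plus (V := R_NormedModule));
          [apply (is_derive_plus (V := R_NormedModule))|]|]|].
    - apply is_derive_volterra_scaled; [exact xs_pos | exact Px | exact Dx].
    - apply is_derive_volterra_scaled; [exact ys_pos | exact Py | exact Dy].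
    - apply is_derive_scal, is_derive_volterra_scaled; [exact us_pos | exact Pu | exact Du].
    - apply is_derive_scal, is_derive_RInt_window, lyap_integrand_continuous.
    - apply (is_derive_scal (fun s => exp (- muv * s)) t _ (- muv * exp (- muv * t))).
      auto_derive; [exact I | ring]. }
  unfold plus; simpl. rewrite lyap_identity by assumption.
  assert (0 <= volterra (xs / x t)) by (apply volterra_ge0, Rdiv_lt_0_compat; lra).
  assert (0 <= volterra (x (t - tau) * u (t - tau) / (xs * us) / (y t / ys))).
  { apply volterra_ge0. apply Rdiv_lt_0_compat; apply Rdiv_lt_0_compat; nra. }
  assert (Hmu : - ((m t - muv) * (u t - us)) <= D * exp (- muv * t)).
  { eapply Rle_trans; [apply Rle_abs|]. rewrite Rabs_Ropp, Rabs_mult.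
    assert (Rabs (u t - us) <= 1) by (apply Rabs_le; lra).
    apply (Rle_trans _ (Rabs (m t - muv) * 1)); [|lra].
    apply Rmult_le_compat_l; [apply Rabs_pos | assumption]. }
  pose proof k_pos. pose proof beta_pos.
  assert (k * - ((m t - muv) * (u t - us)) <= k * (D * exp (- muv * t)))
    by (apply Rmult_le_compat_l; lra).
  assert (0 <= beta * (volterra (xs / x t)
                       + volterra (x (t - tau) * u (t - tau) / (xs * us) / (y t / ys))))
    by (apply Rmult_le_pos; lra).
  unfold lyap_W. replace (k * D / muv * (- muv * exp (- muv * t)))
    with (- (k * (D * exp (- muv * t)))) by (field; lra).
  lra.
Qed.

Lemma lyap_Phi_decrease (p q c : R) : T <= p <= q ->
  (forall s, p <= s <= q -> c <= lyap_W x y u s) ->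
  lyap_Phi tau D x y u q <= lyap_Phi tau D x y u p - c * (q - p).
Proof.
  intros Hpq Hc.
  set (F := fun s => lyap_Phi tau D x y u s + c * s).
  assert (HF : forall t, p < t < q -> exists d, is_derive F t d /\ d <= 0).
  { intros t Ht. destruct (lyap_Phi_derive t ltac:(lra)) as [d [Hd Hle]].
    exists (d + c * 1). split.
    - apply (is_derive_plus (V := R_NormedModule)); [exact Hd|].
      apply is_derive_scal. exact (is_derive_id (K := R_AbsRing) t).
    - specialize (Hc t ltac:(lra)). lra. }
  assert (Hmono : F q <= F p).
  { apply (ge_of_derive_le0 F (Derive F) p q); [lra | | |].
    - intros s _. apply continuity_pt_plus; [apply lyap_Phi_continuous|].
      apply continuity_pt_mult; [apply continuity_pt_cst | apply continuity_pt_id].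
    - intros t Ht. destruct (HF t Ht) as [d [Hd _]]. now rewrite (is_derive_unique F t d Hd).
    - intros t Ht. destruct (HF t Ht) as [d [Hd Hle]]. now rewrite (is_derive_unique F t d Hd). }
  unfold F in Hmono. lra.
Qed.

Lemma lyap_Phi_ge_volterra (t : R) :
  xs * volterra (x t / xs) + ys * volterra (y t / ys) + k * (us * volterra (u t / us))
  <= lyap_Phi tau D x y u t.
Proof.
  unfold lyap_Phi, lyap_V.
  assert (0 <= RInt (fun s => volterra (x s * u s / (xs * us))) (t - tau) t).
  { apply RInt_ge_0; [lra | apply ex_RInt_continuous_everywhere, lyap_integrand_continuous|].
    intros s _. destruct (red_pos s) as [? [? [? ?]]].
    apply volterra_ge0, Rdiv_lt_0_compat; nra. }
  assert (0 <= k * D / muv * exp (- muv * t)).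
  { apply Rmult_le_pos; [|left; apply exp_pos].
    apply Rdiv_le_0_compat; [pose proof k_pos; nra | lra]. }
  pose proof beta_pos. nra.
Qed.

Lemma lyap_Phi_nonneg (t : R) : 0 <= lyap_Phi tau D x y u t.
Proof.
  pose proof (lyap_Phi_ge_volterra t). destruct (red_pos t) as [? [? [? _]]].
  pose proof (volterra_scaled_ge0 xs (x t) xs_pos ltac:(lra)).
  pose proof (volterra_scaled_ge0 ys (y t) ys_pos ltac:(lra)).
  pose proof (volterra_scaled_ge0 us (u t) us_pos ltac:(lra)).
  pose proof k_pos. nra.
Qed.

(* Along the flow, [Phi t <= Phi T] bounds each Volterra term, hence [x], [y], [u] are
   confined to compact subintervals of (0, +oo) after time [T]. *)
Lemma reduced_bounds : exists xl xu yl yu ul,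
  0 < xl /\ xs <= xu /\ 0 < yl /\ 0 < yu /\ 0 < ul /\
  forall t, T <= t -> xl <= x t <= xu /\ yl <= y t <= yu /\ ul <= u t.
Proof.
  set (M0 := lyap_Phi tau D x y u T).
  assert (HM0 : 0 <= M0) by apply lyap_Phi_nonneg.
  assert (Hvolt : forall t, T <= t ->
            xs * volterra (x t / xs) <= M0 /\ ys * volterra (y t / ys) <= M0 /\
            us * volterra (u t / us) <= M0 / k).
  { intros t Ht. pose proof (lyap_Phi_ge_volterra t) as Hge.
    pose proof (lyap_Phi_decrease T t 0 ltac:(lra) (fun s _ => lyap_W_nonneg s)) as Hdec.
    fold M0 in Hdec. rewrite Rmult_0_l, Rminus_0_r in Hdec.
    destruct (red_pos t) as [? [? [? _]]].
    pose proof (volterra_scaled_ge0 xs (x t) xs_pos ltac:(lra)).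
    pose proof (volterra_scaled_ge0 ys (y t) ys_pos ltac:(lra)).
    pose proof (volterra_scaled_ge0 us (u t) us_pos ltac:(lra)).
    pose proof k_pos. assert (0 <= k * (us * volterra (u t / us))) by (apply Rmult_le_pos; lra).
    split; [lra | split; [lra|]].
    apply (Rmult_le_reg_l k); [lra|]. replace (k * (M0 / k)) with M0 by (field; lra). lra. }
  exists (xs * exp (- (1 + M0 / xs))), (xs * (2 * (M0 / xs + 1))),
    (ys * exp (- (1 + M0 / ys))), (ys * (2 * (M0 / ys + 1))), (us * exp (- (1 + M0 / k / us))).
  assert (0 <= M0 / xs) by (apply Rdiv_le_0_compat; lra).
  assert (0 <= M0 / ys) by (apply Rdiv_le_0_compat; lra).
  repeat split; try (apply Rmult_lt_0_compat; [lra | apply exp_pos]); try nra.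
  all: destruct (Hvolt t H1) as [Vx [Vy Vu]]; destruct (red_pos t) as [? [? [? _]]].
  - apply (volterra_scaled_bounds xs (x t) xs_pos ltac:(lra) M0 Vx).
  - apply (volterra_scaled_bounds xs (x t) xs_pos ltac:(lra) M0 Vx).
  - apply (volterra_scaled_bounds ys (y t) ys_pos ltac:(lra) M0 Vy).
  - apply (volterra_scaled_bounds ys (y t) ys_pos ltac:(lra) M0 Vy).
  - apply (volterra_scaled_bounds us (u t) us_pos ltac:(lra) (M0 / k) Vu).
Qed.

Lemma lyap_W_ge_x (s xu : R) : x s <= xu -> muh / xu * (x s - xs) ^ 2 <= lyap_W x y u s.
Proof.
  intros Hxu. destruct (red_pos s) as [Px _]. pose proof (lyap_W_terms_nonneg s).
  apply (Rle_trans _ (muh * (x s - xs) ^ 2 / x s)); [|unfold lyap_W; lra].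
  unfold Rdiv. rewrite (Rmult_comm muh (/ xu)), Rmult_assoc, (Rmult_comm (/ xu)).
  apply Rmult_le_compat_l; [apply Rmult_le_pos; [lra | apply pow2_ge_0]|].
  apply Rinv_le_contravar; lra.
Qed.

Lemma lyap_W_ge_u (s yl : R) : yl <= y s -> k * Chv * yl * (u s - us) ^ 2 <= lyap_W x y u s.
Proof.
  intros Hyl. destruct (red_pos s) as [Px [Py [Pu Pu1]]]. pose proof (lyap_W_terms_nonneg s).
  assert (Hylu : yl <= y s / u s) by (apply (Rle_trans _ (y s)); [lra | apply Rle_div_r; nra]).
  assert (0 <= k * Chv * (u s - us) ^ 2).
  { pose proof k_pos. pose proof Chv_pos. pose proof (pow2_ge_0 (u s - us)).
    apply Rmult_le_pos; [apply Rmult_le_pos|]; lra. }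
  replace (k * Chv * yl * (u s - us) ^ 2) with (k * Chv * (u s - us) ^ 2 * yl) by ring.
  apply (Rle_trans _ (k * Chv * y s * (u s - us) ^ 2 / u s)); [|unfold lyap_W; lra].
  replace (k * Chv * y s * (u s - us) ^ 2 / u s)
    with (k * Chv * (u s - us) ^ 2 * (y s / u s)) by (field; lra).
  apply Rmult_le_compat_l; lra.
Qed.

Lemma lyap_W_ge_ratio (s q : R) : 1 <= q -> (y s / ys) / (u s / us) <= q ->
  beta * us ^ 2 / (2 * q ^ 2) * (y s / ys - u s / us - 0) ^ 2 <= lyap_W x y u s.
Proof.
  intros Hq1 Hq. destruct (red_pos s) as [Px [Py [Pu Pu1]]]. pose proof (lyap_W_terms_nonneg s).
  pose proof beta_pos.
  pose proof (volterra_ratio_ge us (y s / ys) (u s / us) q us_pos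
    ltac:(apply Rdiv_lt_0_compat; lra) ltac:(apply Rdiv_lt_0_compat; lra)
    ltac:(replace (us * (u s / us)) with (u s) by (field; lra); lra) Hq Hq1).
  assert (0 < 2 * q ^ 2) by (apply Rmult_lt_0_compat; [lra | apply pow_lt; lra]).
  replace (beta * us ^ 2 / (2 * q ^ 2) * (y s / ys - u s / us - 0) ^ 2)
    with (beta * (us ^ 2 * (y s / ys - u s / us) ^ 2 / (2 * q ^ 2))) by (field; lra).
  apply (Rle_trans _ (beta * volterra (y s / ys / (u s / us)))); [|unfold lyap_W; lra].
  apply Rmult_le_compat_l; lra.
Qed.

Variable mB : R.
Hypothesis m_bounded : forall t, T < t -> 0 <= m t <= mB.

Let Phi := lyap_Phi tau D x y u.

Lemma reduced_x_converges : is_lim x p_infty xs.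
Proof.
  destruct reduced_bounds as [xl [xu [yl [yu [ul [Hxl [Hxu [Hyl [Hyu [Hul B]]]]]]]]]].
  apply is_lim_of_sq_vanishes. intros eps Heps.
  apply (dissipation_vanishes Phi (lyap_W x y u) (fun s => (x s - xs) ^ 2)
    (fun s => 2 * (x s - xs) * (bh - Cvh * u s * x s - muh * x s)) T T (muh / xu)
    (2 * (xu + xs) * (bh + Cvh * xu + muh * xu))); [apply Rdiv_lt_0_compat; lra | lra
    | intros t _; apply lyap_Phi_nonneg | apply lyap_Phi_decrease | | | exact Heps].
  - intros s Hs. split; [apply pow2_ge_0 | apply lyap_W_ge_x, B, Hs].
  - intros t Ht. destruct (red_derive t Ht) as [Dx _]. split; [now apply is_derive_sq_sub|].
    destruct (B t ltac:(lra)) as [Bx _]. destruct (red_pos t) as [Px [_ [Pu Pu1]]].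
    apply Rabs_double_mul_le; [apply Rabs_le; lra|].
    apply host_rate_bound; [rewrite eq_x; nra | exact Cvh_pos | exact muh_pos | lra | lra].
Qed.

Lemma reduced_u_converges : is_lim u p_infty us.
Proof.
  destruct reduced_bounds as [xl [xu [yl [yu [ul [Hxl [Hxu [Hyl [Hyu [Hul B]]]]]]]]]].
  pose proof k_pos. pose proof Chv_pos.
  apply is_lim_of_sq_vanishes. intros eps Heps.
  apply (dissipation_vanishes Phi (lyap_W x y u) (fun s => (u s - us) ^ 2)
    (fun s => 2 * (u s - us) * (Chv * y s * (1 - u s) - m s * u s)) T T (k * Chv * yl)
    (2 * 1 * (Chv * yu + mB))); [apply Rmult_lt_0_compat; [apply Rmult_lt_0_compat|]; lra
    | lra | intros t _; apply lyap_Phi_nonneg | apply lyap_Phi_decrease | | | exact Heps].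
  - intros s Hs. split; [apply pow2_ge_0 | apply lyap_W_ge_u, B, Hs].
  - intros t Ht. destruct (red_derive t Ht) as [_ [_ [Du _]]].
    split; [now apply is_derive_sq_sub|].
    destruct (B t ltac:(lra)) as [_ [By _]]. destruct (red_pos t) as [Px [Py [Pu Pu1]]].
    apply Rabs_double_mul_le; [apply Rabs_le; lra|].
    apply vector_rate_bound; [lra | lra | lra | now apply m_bounded].
Qed.

Lemma reduced_ratio_converges : is_lim (fun s => y s / ys - u s / us) p_infty 0.
Proof.
  destruct reduced_bounds as [xl [xu [yl [yu [ul [Hxl [Hxu [Hyl [Hyu [Hul B]]]]]]]]]].
  set (q := Rmax 1 ((yu / ys) / (ul / us))).
  assert (Hq2 : 0 < 2 * q ^ 2).
  { apply Rmult_lt_0_compat; [lra|]. apply pow_lt.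
    pose proof (Rmax_l 1 ((yu / ys) / (ul / us))). unfold q. lra. }
  pose proof beta_pos. pose proof Cvh_pos. pose proof Chv_pos.
  apply is_lim_of_sq_vanishes. intros eps Heps.
  apply (dissipation_vanishes Phi (lyap_W x y u) (fun s => (y s / ys - u s / us - 0) ^ 2)
    (fun s => 2 * (y s / ys - u s / us - 0) *
       ((Cvh * u (s - tau) * x (s - tau) - muh * y s) / ys
        - (Chv * y s * (1 - u s) - m s * u s) / us))
    T (T + tau) (beta * us ^ 2 / (2 * q ^ 2))
    (2 * (yu / ys + 1 / us) * ((Cvh * xu + muh * yu) / ys + (Chv * yu + mB) / us)));
    [apply Rdiv_lt_0_compat; [apply Rmult_lt_0_compat; [lra | apply pow_lt, us_pos] | exact Hq2]
    | lra | intros t _; apply lyap_Phi_nonneg | apply lyap_Phi_decrease | | | exact Heps].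
  - intros s Hs. split; [apply pow2_ge_0|].
    destruct (B s Hs) as [_ [By Bu]]. destruct (red_pos s) as [Px [Py [Pu Pu1]]].
    apply lyap_W_ge_ratio; [apply Rmax_l|].
    apply (Rle_trans _ ((yu / ys) / (ul / us))); [|apply Rmax_r].
    apply Rmult_le_compat;
      [apply Rdiv_le_0_compat; lra | left; apply Rinv_0_lt_compat, Rdiv_lt_0_compat; lra
      | apply Rmult_le_compat_r; [left; apply Rinv_0_lt_compat|]; lra |].
    apply Rinv_le_contravar; [apply Rdiv_lt_0_compat; lra|].
    apply Rmult_le_compat_r; [left; apply Rinv_0_lt_compat|]; lra.
  - intros t Ht. destruct (red_derive t ltac:(lra)) as [_ [Dy [Du _]]].
    destruct (B t ltac:(lra)) as [_ [By _]]. destruct (red_pos t) as [Px [Py [Pu Pu1]]].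
    destruct (B (t - tau) ltac:(lra)) as [Bx _].
    destruct (red_pos (t - tau)) as [Pxd [_ [Pud Pud1]]].
    split.
    + apply (is_derive_sq_sub (fun s => y s / ys - u s / us)).
      apply (is_derive_minus (V := R_NormedModule) (fun s => y s / ys) (fun s => u s / us));
        now apply is_derive_div_const.
    + apply Rabs_double_mul_le.
      * rewrite Rminus_0_r. apply Rabs_sub_div_le; [lra | lra | apply Rabs_le; lra..].
      * apply Rabs_sub_div_le; [lra | lra | apply infection_rate_bound; lra|].
        apply vector_rate_bound; [lra | lra | lra | apply m_bounded; lra].
Qed.

End Lyapunov.

(** * The endemic equilibrium *)

(* At the endemic equilibrium the vector population is [bv / muv], of which the
   fraction [u_star] is infected; [u_star] solves
   [Chv Cvh bh (1 - u) = muv muh (Cvh u + muh)]. *)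
Definition u_star (bh muh muv Cvh Chv : R) : R :=
  (Chv * Cvh * bh - muv * muh ^ 2) / (Chv * Cvh * bh + muv * muh * Cvh).
Definition Sh_star (bh muh muv Cvh Chv : R) : R :=
  bh / (Cvh * u_star bh muh muv Cvh Chv + muh).
Definition Ih_star (bh muh muv Cvh Chv : R) : R :=
  Cvh * u_star bh muh muv Cvh Chv * Sh_star bh muh muv Cvh Chv / muh.

Section Equilibrium.

Variables bh bv muh muv Cvh Chv : R.
Hypotheses (bh_pos : 0 < bh) (bv_pos : 0 < bv) (muh_pos : 0 < muh) (muv_pos : 0 < muv)
  (Cvh_pos : 0 < Cvh).

Lemma repro_number_gt1 :
  repro_number bh muh muv Cvh Chv > 1 -> muv * muh ^ 2 < Chv * Cvh * bh.
Proof.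
  unfold repro_number. intros HR.
  assert (Hden : 0 < muh ^ 2 * muv) by (apply Rmult_lt_0_compat; [apply pow_lt|]; lra).
  destruct (Rlt_le_dec 1 (Cvh * Chv * bh / (muh ^ 2 * muv))) as [Hl|Hl].
  - apply (Rmult_lt_compat_r (muh ^ 2 * muv)) in Hl; [|exact Hden].
    unfold Rdiv in Hl. rewrite Rmult_assoc, Rinv_l, Rmult_1_r in Hl by lra. lra.
  - apply sqrt_le_1_alt in Hl. rewrite sqrt_1 in Hl. lra.
Qed.

Hypothesis R0_gt1 : muv * muh ^ 2 < Chv * Cvh * bh.

Let us := u_star bh muh muv Cvh Chv.
Let xs := Sh_star bh muh muv Cvh Chv.
Let ys := Ih_star bh muh muv Cvh Chv.

Let muv_muh_Cvh_pos : 0 < muv * muh * Cvh.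
Proof. repeat apply Rmult_lt_0_compat; lra. Qed.

Let muv_muh2_pos : 0 < muv * muh ^ 2.
Proof. apply Rmult_lt_0_compat; [|apply pow_lt]; lra. Qed.

Lemma u_star_bounds : 0 < us < 1.
Proof.
  pose proof muv_muh_Cvh_pos. pose proof muv_muh2_pos.
  unfold us, u_star. split.
  - apply Rdiv_lt_0_compat; lra.
  - apply Rlt_div_l; lra.
Qed.

Lemma u_star_key : Chv * Cvh * bh * (1 - us) = muv * muh * (Cvh * us + muh).
Proof.
  pose proof muv_muh_Cvh_pos. pose proof muv_muh2_pos.
  unfold us, u_star. field. lra.
Qed.

Lemma endemic_star_spec :
  0 < us < 1 /\ 0 < xs /\ 0 < ys /\
  bh = Cvh * us * xs + muh * xs /\ Cvh * us * xs = muh * ys /\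
  Chv * ys * (1 - us) = muv * us.
Proof.
  destruct u_star_bounds as [Hus Hus1].
  assert (Hcu : 0 < Cvh * us + muh) by (pose proof (Rmult_lt_0_compat _ _ Cvh_pos Hus); lra).
  assert (Hxs : 0 < xs) by (unfold xs, Sh_star; fold us; apply Rdiv_lt_0_compat; lra).
  assert (Hys : 0 < ys).
  { unfold ys, Ih_star. fold us xs. apply Rdiv_lt_0_compat; [|lra].
    apply Rmult_lt_0_compat; [apply Rmult_lt_0_compat|]; assumption. }
  repeat split; try lra.
  - unfold xs, Sh_star. fold us. field. lra.
  - unfold ys, Ih_star. fold us xs. field. lra.
  - pose proof u_star_key as Hkey.
    unfold ys, Ih_star, xs, Sh_star. fold us.
    transitivity (us * (Chv * Cvh * bh * (1 - us)) / (muh * (Cvh * us + muh)));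
      [field; lra | rewrite Hkey; field; lra].
Qed.

Lemma endemic_is_equilibrium :
  is_equilibrium bh bv muh muv Cvh Chv xs ys ((1 - us) * (bv / muv)) (us * (bv / muv)).
Proof.
  destruct endemic_star_spec as [[Hus Hus1] [Hxs [Hys [E1 [E2 E3]]]]].
  assert (Hfrac : us * (bv / muv) / ((1 - us) * (bv / muv) + us * (bv / muv)) = us)
    by (field; lra).
  unfold is_equilibrium, f_Sh, f_Ih, f_Sv, f_Iv. rewrite Hfrac.
  repeat split.
  - lra.
  - lra.
  - replace (Chv * ys * ((1 - us) * (bv / muv))) with (Chv * ys * (1 - us) * (bv / muv)) by ring.
    rewrite E3. field. lra.
  - replace (Chv * ys * ((1 - us) * (bv / muv))) with (Chv * ys * (1 - us) * (bv / muv)) by ring.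
    rewrite E3. ring.
Qed.

Lemma positive_equilibrium_unique (a b c d : R) :
  0 < a -> 0 < b -> 0 < c -> 0 < d -> is_equilibrium bh bv muh muv Cvh Chv a b c d ->
  a = xs /\ b = ys /\ c = (1 - us) * (bv / muv) /\ d = us * (bv / muv).
Proof.
  intros Ha Hb Hc Hd [E1 [E2 [E3 E4]]].
  unfold f_Sh, f_Ih, f_Sv, f_Iv in *.
  set (p := d / (c + d)) in *.
  assert (HN : c + d = bv / muv) by (field_simplify_eq; [nra | lra]).
  assert (Hp : 0 < p) by (apply Rdiv_lt_0_compat; lra).
  assert (Hc' : c = (1 - p) * (bv / muv)) by (rewrite <- HN; unfold p; field; lra).
  assert (Hd' : d = p * (bv / muv)) by (rewrite <- HN; unfold p; field; lra).
  assert (Hcp : 0 < Cvh * p + muh) by nra.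
  assert (Ha' : a = bh / (Cvh * p + muh)) by (field_simplify_eq; lra).
  assert (Hb' : b = Cvh * p * a / muh) by (field_simplify_eq; lra).
  assert (Hrel : Chv * b * (1 - p) = muv * p).
  { apply (Rmult_eq_reg_r (bv / muv)); [|apply Rgt_not_eq, Rdiv_lt_0_compat; lra].
    rewrite Hc', Hd' in E4. lra. }
  assert (Hkey : Chv * Cvh * bh * (1 - p) = muv * muh * (Cvh * p + muh)).
  { rewrite Hb', Ha' in Hrel. apply (Rmult_eq_reg_l p); [|lra].
    transitivity (muh * (Cvh * p + muh) *
                  (Chv * (Cvh * p * (bh / (Cvh * p + muh)) / muh) * (1 - p)));
      [field; lra | rewrite Hrel; field]. }
  assert (Hpu : p = us).
  { pose proof u_star_key. pose proof muv_muh_Cvh_pos. pose proof muv_muh2_pos. nra. }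
  assert (Hax : a = xs) by (unfold xs, Sh_star; fold us; rewrite <- Hpu; exact Ha').
  repeat split; try (rewrite <- Hpu; assumption).
  - exact Hax.
  - unfold ys, Ih_star. fold us xs. rewrite <- Hpu, <- Hax. exact Hb'.
Qed.

End Equilibrium.

Lemma exp_neg_mul_le1 (a t : R) : 0 <= a -> 0 <= t -> exp (- a * t) <= 1.
Proof.
  intros Ha Ht. rewrite <- exp_0.
  destruct (Req_dec (a * t) 0) as [H|H].
  - replace (- a * t) with 0 by lra. lra.
  - left. apply exp_increasing. nra.
Qed.

Lemma relaxation_bounds (Ns N0 e : R) : 0 < e <= 1 ->
  Rmin N0 Ns <= Ns + (N0 - Ns) * e <= Rmax N0 Ns.
Proof. intros He. unfold Rmin, Rmax. destruct (Rle_dec N0 Ns); split; nra. Qed.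

Lemma linear_ode_explicit (b mu : R) (N : R -> R) : 0 < mu ->
  (forall s, continuity_pt (extend_left 0 N) s) ->
  (forall t, 0 < t -> is_derive N t (b - mu * N t)) ->
  forall t, 0 <= t -> N t = b / mu + (N 0 - b / mu) * exp (- mu * t).
Proof.
  intros Hmu Hc Hd t Ht.
  set (h := fun r => (extend_left 0 N r - b / mu) * exp (mu * r)).
  assert (Hhc : forall s, continuity_pt h s).
  { intros s. apply continuity_pt_mult; [|apply continuity_pt_exp_lin].
    apply continuity_pt_minus; [apply Hc | apply continuity_pt_cst]. }
  assert (Hhd : forall s, 0 < s -> is_derive h s 0).
  { intros s Hs. pose proof (is_derive_extend_left 0 N s _ Hs (Hd s Hs)) as HN.
    unfold h. auto_derive; [exists (b - mu * N s); exact HN|].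
    rewrite (Derive_eta_unique _ _ _ HN), extend_left_eq by lra. field. lra. }
  assert (Hh : h t = h 0).
  { apply Rle_antisym.
    - apply (ge_of_derive_le0 h (fun _ => 0) 0 t); auto; intros; [apply Hhd | ]; lra.
    - apply (le_of_derive_ge0 h (fun _ => 0) 0 t); auto; intros; [apply Hhd | ]; lra. }
  unfold h in Hh. rewrite !extend_left_eq, Rmult_0_r, exp_0, Rmult_1_r in Hh by lra.
  rewrite <- Hh, Rmult_assoc, <- exp_plus.
  replace (mu * t + - mu * t) with 0 by ring. rewrite exp_0. ring.
Qed.

Section IntegratingFactor.

Variables f c g : R -> R.
Hypothesis f_cont : forall s, continuity_pt (extend_left 0 f) s.
Hypothesis c_cont : forall s, continuity_pt c s.
Hypothesis f_derive : forall t, 0 < t -> is_derive f t (g t - c t * f t).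

Let F (r : R) : R := extend_left 0 f r * exp (RInt c 0 r).

Let F_cont (s : R) : continuity_pt F s.
Proof.
  apply continuity_pt_mult; [apply f_cont|].
  apply (continuity_pt_comp (fun r => RInt c 0 r) exp).
  - exact (is_derive_continuity_pt _ _ _ (is_derive_RInt_upper c c_cont 0 s)).
  - apply derivable_continuous_pt, derivable_pt_exp.
Qed.

Let F_derive (t : R) : 0 < t -> is_derive F t (g t * exp (RInt c 0 t)).
Proof.
  intros Ht. unfold F.
  pose proof (is_derive_extend_left 0 f t _ Ht (f_derive t Ht)) as Hf.
  pose proof (is_derive_RInt_upper c c_cont 0 t) as Hc.
  replace (g t * exp (RInt c 0 t)) with ((g t - c t * f t) * exp (RInt c 0 t)
    + extend_left 0 f t * (c t * exp (RInt c 0 t))) by (rewrite extend_left_eq by lra; ring).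
  apply (is_derive_mult (extend_left 0 f) (fun r => exp (RInt c 0 r)));
    [exact Hf | | intros; apply Rmult_comm].
  exact (is_derive_comp exp (fun r => RInt c 0 r) t _ _ (is_derive_exp _) Hc).
Qed.

Let F_eq (r : R) : 0 <= r -> F r = f r * exp (RInt c 0 r).
Proof. intros Hr. unfold F. now rewrite extend_left_eq. Qed.

Lemma integrating_factor_mono (p q : R) : 0 <= p <= q ->
  (forall t, p < t < q -> 0 <= g t) ->
  f p * exp (RInt c 0 p) <= f q * exp (RInt c 0 q).
Proof.
  intros Hpq Hg. rewrite <- !F_eq by lra.
  apply (le_of_derive_ge0 F (fun t => g t * exp (RInt c 0 t))); [lra | intros; apply F_cont | |].
  - intros t Ht. apply F_derive. lra.
  - intros t Ht. apply Rmult_le_pos; [apply Hg, Ht | left; apply exp_pos].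
Qed.

Lemma integrating_factor_nonneg (p q : R) : 0 <= p <= q ->
  (forall t, p < t < q -> 0 <= g t) -> 0 <= f p -> 0 <= f q.
Proof.
  intros Hpq Hg Hfp. pose proof (integrating_factor_mono p q Hpq Hg).
  pose proof (exp_pos (RInt c 0 p)). pose proof (exp_pos (RInt c 0 q)).
  assert (0 <= f q * exp (RInt c 0 q)) by nra. nra.
Qed.

Lemma integrating_factor_pos_of_pos (p q : R) : 0 <= p <= q ->
  (forall t, p < t < q -> 0 <= g t) -> 0 < f p -> 0 < f q.
Proof.
  intros Hpq Hg Hfp. pose proof (integrating_factor_mono p q Hpq Hg).
  pose proof (exp_pos (RInt c 0 p)). pose proof (exp_pos (RInt c 0 q)).
  assert (0 < f q * exp (RInt c 0 q)) by nra. nra.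
Qed.

Lemma integrating_factor_pos (p q : R) : 0 <= p < q ->
  (forall t, p < t < q -> 0 < g t) -> 0 <= f p -> 0 < f q.
Proof.
  intros Hpq Hg Hfp.
  assert (HF : F p < F q).
  { apply (lt_of_derive_gt0 F (fun t => g t * exp (RInt c 0 t)));
      [lra | intros; apply F_cont | |].
    - intros t Ht. apply F_derive. lra.
    - intros t Ht. apply Rmult_lt_0_compat; [apply Hg, Ht | apply exp_pos]. }
  rewrite !F_eq in HF by lra.
  pose proof (exp_pos (RInt c 0 p)). pose proof (exp_pos (RInt c 0 q)).
  assert (0 < f q * exp (RInt c 0 q)) by nra. nra.
Qed.

End IntegratingFactor.

Lemma solution_component_cont_from (tau : R) (f : R -> R) :
  cont_on (- tau) 0 f -> filterlim f (at_right 0) (locally (f 0)) ->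
  (forall t, 0 < t -> exists l, is_derive f t l) ->
  forall s, - tau <= s -> cont_from (- tau) f s.
Proof.
  intros Hon Hright Hd. apply (cont_from_glue (- tau) 0); [exact Hon | exact Hright|].
  intros t Ht. destruct (Hd t Ht) as [l Hl]. exact (is_derive_continuity_pt _ _ _ Hl).
Qed.

Definition infected_fraction (Sv Iv : R -> R) (r : R) : R := Iv r / (Sv r + Iv r).

(* Rate constant of [|bv / Nv(t) - muv| <= turnover_gap * exp (- muv * t)], where
   [Nv(t) = bv / muv + (N0 - bv / muv) exp (- muv t)]. *)
Definition turnover_gap (bv muv N0 : R) : R :=
  bv * Rabs (N0 - bv / muv) / (Rmin N0 (bv / muv) * (bv / muv)).

Lemma turnover_gap_nonneg (bv muv N0 : R) : 0 < bv -> 0 < muv -> 0 < N0 ->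
  0 <= turnover_gap bv muv N0.
Proof.
  intros Hbv Hmuv HN0. assert (0 < bv / muv) by (apply Rdiv_lt_0_compat; lra).
  apply Rdiv_le_0_compat; [apply Rmult_le_pos; [lra | apply Rabs_pos]|].
  apply Rmult_lt_0_compat; [apply Rmin_pos|]; lra.
Qed.

Lemma turnover_rate_bound (bv muv N0 e : R) : 0 < bv -> 0 < muv -> 0 < N0 -> 0 < e <= 1 ->
  Rabs (bv / (bv / muv + (N0 - bv / muv) * e) - muv) <= turnover_gap bv muv N0 * e.
Proof.
  intros Hbv Hmuv HN0 He. unfold turnover_gap.
  set (Ns := bv / muv). set (N := Ns + (N0 - Ns) * e).
  assert (HNs : 0 < Ns) by (apply Rdiv_lt_0_compat; lra).
  assert (Hmin : 0 < Rmin N0 Ns) by (apply Rmin_pos; lra).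
  assert (HN : Rmin N0 Ns <= N) by apply relaxation_bounds, He.
  assert (HNN : 0 < N * Ns) by (apply Rmult_lt_0_compat; lra).
  assert (Hmuv' : muv = bv / Ns) by (unfold Ns; field; lra).
  replace (bv / N - muv) with (- (bv * (N - Ns)) / (N * Ns)) by (rewrite Hmuv'; field; lra).
  replace (N - Ns) with ((N0 - Ns) * e) by (unfold N; ring).
  rewrite Rabs_div, (Rabs_pos_eq (N * Ns)) by lra.
  rewrite Rabs_Ropp, !Rabs_mult, (Rabs_pos_eq bv), (Rabs_pos_eq e) by lra.
  assert (0 <= bv * Rabs (N0 - Ns) * e)
    by (apply Rmult_le_pos; [apply Rmult_le_pos; [lra | apply Rabs_pos] | lra]).
  unfold Rdiv. replace (bv * (Rabs (N0 - Ns) * e)) with (bv * Rabs (N0 - Ns) * e) by ring.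
  replace (bv * Rabs (N0 - Ns) * / (Rmin N0 Ns * Ns) * e)
    with (bv * Rabs (N0 - Ns) * e * / (Rmin N0 Ns * Ns)) by ring.
  apply Rmult_le_compat_l; [assumption|].
  apply Rinv_le_contravar; [nra | apply Rmult_le_compat_r; lra].
Qed.

Lemma is_derive_fraction (S I : R -> R) (t dS dI : R) :
  is_derive S t dS -> is_derive I t dI -> S t + I t <> 0 ->
  is_derive (fun r => I r / (S r + I r)) t
    ((dI * (S t + I t) - I t * (dS + dI)) / (S t + I t) ^ 2).
Proof.
  intros HS HI HN. auto_derive.
  - repeat split; [exists dI; exact HI | exists dS; exact HS | exists dI; exact HI | exact HN].
  - rewrite (Derive_eta_unique _ _ _ HS), (Derive_eta_unique _ _ _ HI). field. exact HN.
Qed.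

Lemma fraction_close (S I us Ns d : R) : 0 < us < 1 -> 0 < Ns -> 0 < d -> d <= Ns / 4 ->
  Rabs (S - (1 - us) * Ns) < d -> Rabs (I - us * Ns) < d ->
  Rabs (I / (S + I) - us) <= 6 / Ns * d.
Proof.
  intros Hus HNs Hd HdN H1 H2. apply Rabs_def2 in H1. apply Rabs_def2 in H2.
  assert (HN : Ns / 2 <= S + I) by lra.
  replace (I / (S + I) - us) with ((Ns * (I - us * Ns) - us * Ns * (S + I - Ns)) / ((S + I) * Ns))
    by (field; lra).
  rewrite Rabs_div, (Rabs_pos_eq ((S + I) * Ns)) by nra.
  apply (Rmult_le_reg_r ((S + I) * Ns)); [nra|].
  replace (Rabs (Ns * (I - us * Ns) - us * Ns * (S + I - Ns)) / ((S + I) * Ns) * ((S + I) * Ns))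
    with (Rabs (Ns * (I - us * Ns) - us * Ns * (S + I - Ns))) by (field; nra).
  assert (HuN : 0 < us * Ns) by nra.
  assert (Ns * (- d) <= Ns * (I - us * Ns) <= Ns * d)
    by (split; apply Rmult_le_compat_l; lra).
  assert (us * Ns * (- (2 * d)) <= us * Ns * (S + I - Ns) <= us * Ns * (2 * d))
    by (split; apply Rmult_le_compat_l; lra).
  assert (us * Ns * d <= Ns * d) by (apply Rmult_le_compat_r; nra).
  assert (Rabs (Ns * (I - us * Ns) - us * Ns * (S + I - Ns)) <= 3 * Ns * d)
    by (apply Rabs_le; split; lra).
  replace (6 / Ns * d * ((S + I) * Ns)) with (6 * d * (S + I)) by (field; lra). nra.
Qed.

Lemma product_ratio_close (x u xs us d K : R) : 0 < xs -> 0 < us -> 0 < u < 1 ->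
  Rabs (x - xs) <= d -> Rabs (u - us) <= K * d ->
  Rabs (x * u / (xs * us) - 1) <= (1 + xs * K) / (xs * us) * d.
Proof.
  intros Hxs Hus Hu Hx Hu'. assert (Hxu : 0 < xs * us) by nra.
  replace (x * u / (xs * us) - 1) with (((x - xs) * u + xs * (u - us)) / (xs * us)) by (field; lra).
  rewrite Rabs_div, (Rabs_pos_eq (xs * us)) by lra.
  replace ((1 + xs * K) / (xs * us) * d) with ((d + xs * (K * d)) / (xs * us)) by (field; lra).
  apply Rmult_le_compat_r; [left; apply Rinv_0_lt_compat, Hxu|].
  eapply Rle_trans; [apply Rabs_triang|].
  rewrite !Rabs_mult, (Rabs_pos_eq u), (Rabs_pos_eq xs) by lra.
  pose proof (Rabs_pos (x - xs)).
  assert (Rabs (x - xs) * u <= d) by nra.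
  assert (xs * Rabs (u - us) <= xs * (K * d)) by (apply Rmult_le_compat_l; lra).
  lra.
Qed.

Lemma turnover_gap_near (bv muv N0 d : R) : 0 < bv -> 0 < muv ->
  Rabs (N0 - bv / muv) <= 2 * d -> 2 * d <= bv / muv / 2 ->
  turnover_gap bv muv N0 <= 4 * bv * d / (bv / muv) ^ 2.
Proof.
  intros Hbv Hmuv HN Hd. unfold turnover_gap. set (Ns := bv / muv) in *.
  assert (HNs : 0 < Ns) by (apply Rdiv_lt_0_compat; lra).
  assert (Hmin : Ns / 2 <= Rmin N0 Ns)
    by (apply Rmin_glb; [apply Rabs_le_between in HN|]; lra).
  apply (Rle_trans _ (bv * (2 * d) / (Ns / 2 * Ns))).
  - unfold Rdiv. apply Rmult_le_compat.
    + apply Rmult_le_pos; [lra | apply Rabs_pos].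
    + left. apply Rinv_0_lt_compat. apply Rmult_lt_0_compat; [|exact HNs]. lra.
    + apply Rmult_le_compat_l; lra.
    + apply Rinv_le_contravar; [nra | apply Rmult_le_compat_r; lra].
  - right. field. lra.
Qed.

Lemma vector_split_close (S I us Ns r d : R) : 0 < us < 1 -> 0 < Ns -> 0 <= d <= 1 ->
  0 < S + I -> Rabs (I / (S + I) - us) < r -> Rabs (S + I - Ns) <= d ->
  Rabs (I - us * Ns) < r * (Ns + 1) + d /\ Rabs (S - (1 - us) * Ns) < r * (Ns + 1) + 2 * d.
Proof.
  intros Hus HNs Hd HN Hu HNd.
  assert (HNup : S + I <= Ns + 1) by (apply Rabs_le_between in HNd; lra).
  assert (HI : Rabs (I - us * Ns) < r * (Ns + 1) + d).
  { replace (I - us * Ns) with ((I / (S + I) - us) * (S + I) + us * (S + I - Ns)) by (field; lra).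
    eapply Rle_lt_trans; [apply Rabs_triang|].
    rewrite !Rabs_mult, (Rabs_pos_eq (S + I)), (Rabs_pos_eq us) by lra.
    pose proof (Rabs_pos (I / (S + I) - us)).
    assert (Rabs (I / (S + I) - us) * (S + I) < r * (Ns + 1)).
    { apply (Rle_lt_trans _ (Rabs (I / (S + I) - us) * (Ns + 1))); [apply Rmult_le_compat_l; lra|].
      apply Rmult_lt_compat_r; lra. }
    assert (us * Rabs (S + I - Ns) <= d) by (pose proof (Rabs_pos (S + I - Ns)); nra).
    lra. }
  split; [exact HI|].
  replace (S - (1 - us) * Ns) with ((S + I - Ns) - (I - us * Ns)) by ring.
  eapply Rle_lt_trans; [apply Rabs_triang|]. rewrite Rabs_Ropp. lra.
Qed.

(** * Solutions: positivity, stability and attractivity *)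

Section Model.

Variables bh bv muh muv Cvh Chv tau : R.
Hypotheses (bh_pos : 0 < bh) (bv_pos : 0 < bv) (muh_pos : 0 < muh) (muv_pos : 0 < muv)
  (Cvh_pos : 0 < Cvh) (Chv_pos : 0 < Chv) (tau_ge0 : 0 <= tau).
Hypothesis R0_gt1 : muv * muh ^ 2 < Chv * Cvh * bh.

Let us := u_star bh muh muv Cvh Chv.
Let xs := Sh_star bh muh muv Cvh Chv.
Let ys := Ih_star bh muh muv Cvh Chv.
Let Ns := bv / muv.
Let k := muh * ys / (muv * us).
Let beta := muh * ys.
Let K1 := 6 / Ns.
Let K2 := (1 + xs * K1) / (xs * us).

(* Phi(0) <= init_gain * delta for initial data delta-close to the endemic equilibrium;
   the five summands bound the five terms of Phi(0). *)
Let init_gain := 2 / xs + 2 / ys + 2 * k * K1 ^ 2 / us + 2 * beta * tau * K2 ^ 2 + 4 * k / Ns.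

Let admissible (delta : R) : Prop :=
  0 < delta /\ delta <= 1 / 2 /\ delta <= xs / 2 /\ delta <= ys / 2 /\
  delta <= (1 - us) * Ns / 2 /\ delta <= us * Ns / 2 /\ delta <= Ns / 4 /\
  K1 * delta <= us / 2 /\ K2 * delta <= 1 / 2.

Let star_spec : 0 < us < 1 /\ 0 < xs /\ 0 < ys /\
  bh = Cvh * us * xs + muh * xs /\ Cvh * us * xs = muh * ys /\ Chv * ys * (1 - us) = muv * us.
Proof. now apply endemic_star_spec. Qed.

Let Ns_pos : 0 < Ns.
Proof. apply Rdiv_lt_0_compat; lra. Qed.

Let gains_pos : 0 < K1 /\ 0 < K2 /\ 0 < k /\ 0 < beta.
Proof.
  destruct star_spec as [[Hus Hus1] [Hxs [Hys _]]].
  assert (HK1 : 0 < K1) by (apply Rdiv_lt_0_compat; lra).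
  repeat split; [exact HK1 | apply Rdiv_lt_0_compat; nra | apply Rdiv_lt_0_compat; nra
    | unfold beta; nra].
Qed.

Lemma admissible_exists : exists delta0, admissible delta0 /\
  forall delta, 0 < delta <= delta0 -> admissible delta.
Proof.
  destruct star_spec as [[Hus Hus1] [Hxs [Hys _]]]. destruct gains_pos as [HK1 [HK2 _]].
  set (d0 := Rmin (Rmin (Rmin (1 / 2) (xs / 2)) (Rmin (ys / 2) ((1 - us) * Ns / 2)))
                  (Rmin (Rmin (us * Ns / 2) (Ns / 4)) (Rmin (us / (2 * K1)) (1 / (2 * K2))))).
  assert (Hd0 : 0 < d0)
    by (repeat apply Rmin_pos; try apply Rdiv_lt_0_compat; nra).
  assert (Hle : forall delta, 0 < delta <= d0 -> admissible delta).
  { intros delta [Hd Hdd]. unfold d0 in Hdd. rewrite !Rle_Rmin_iff in Hdd.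
    destruct Hdd as [[[H1 H2] [H3 H4]] [[H5 H6] [H7 H8]]].
    apply Rle_div_r in H7; [|lra]. apply Rle_div_r in H8; [|lra].
    repeat split; lra. }
  exists d0. split; [apply Hle; lra | exact Hle].
Qed.

Section Solution.

Variables Sh Ih Sv Iv : R -> R.
Hypothesis init : init_in_D tau Sh Ih Sv Iv.
Hypothesis sol : is_solution bh bv muh muv Cvh Chv tau Sh Ih Sv Iv.

Let init_nonneg (t : R) : - tau <= t <= 0 ->
  0 <= Sh t /\ 0 <= Ih t /\ 0 <= Sv t /\ 0 <= Iv t /\ 0 < Sv t + Iv t.
Proof. apply init. Qed.

Let sol_derive (t : R) : 0 < t ->
  is_derive Sh t (f_Sh bh Cvh muh (Sh t) (Sv t) (Iv t)) /\
  is_derive Ih t (f_Ih Cvh muh (Sh (t - tau)) (Sv (t - tau)) (Iv (t - tau)) (Ih t)) /\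
  is_derive Sv t (f_Sv bv Chv muv (Ih t) (Sv t)) /\
  is_derive Iv t (f_Iv Chv muv (Ih t) (Sv t) (Iv t)).
Proof. apply sol. Qed.

Lemma solution_extend_continuous (a : R) : - tau <= a -> forall s,
  continuity_pt (extend_left a Sh) s /\ continuity_pt (extend_left a Ih) s /\
  continuity_pt (extend_left a Sv) s /\ continuity_pt (extend_left a Iv) s.
Proof.
  destruct init as [HSh [HIh [HSv [HIv _]]]].
  destruct sol as [RSh [RIh [RSv [RIv _]]]].
  intros Ha s. repeat split; apply (continuity_pt_extend_left (- tau)); try exact Ha;
    apply solution_component_cont_from; try assumption;
    intros t Ht; destruct (sol_derive t Ht) as [D1 [D2 [D3 D4]]]; eexists; eassumption.
Qed.

Let ext0_cont (s : R) :
  continuity_pt (extend_left 0 Sh) s /\ continuity_pt (extend_left 0 Ih) s /\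
  continuity_pt (extend_left 0 Sv) s /\ continuity_pt (extend_left 0 Iv) s.
Proof. apply solution_extend_continuous. lra. Qed.

Lemma vector_total_explicit (t : R) : 0 <= t ->
  Sv t + Iv t = bv / muv + (Sv 0 + Iv 0 - bv / muv) * exp (- muv * t).
Proof.
  apply (linear_ode_explicit bv muv (fun r => Sv r + Iv r) muv_pos).
  - intros s. destruct (ext0_cont s) as [_ [_ [HSv HIv]]].
    exact (continuity_pt_plus _ _ s HSv HIv).
  - intros r Hr. destruct (sol_derive r Hr) as [_ [_ [D3 D4]]].
    replace (bv - muv * (Sv r + Iv r))
      with (f_Sv bv Chv muv (Ih r) (Sv r) + f_Iv Chv muv (Ih r) (Sv r) (Iv r))
      by (unfold f_Sv, f_Iv; ring).
    exact (is_derive_plus Sv Iv r _ _ D3 D4).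
Qed.

Lemma vector_total_bounds (t : R) : 0 <= t ->
  Rmin (Sv 0 + Iv 0) (bv / muv) <= Sv t + Iv t <= Rmax (Sv 0 + Iv 0) (bv / muv).
Proof.
  intros Ht. rewrite (vector_total_explicit t Ht).
  apply relaxation_bounds. split; [apply exp_pos | apply exp_neg_mul_le1; lra].
Qed.

Lemma vector_total_pos (t : R) : 0 <= t -> 0 < Sv t + Iv t.
Proof.
  intros Ht. eapply Rlt_le_trans; [|apply (vector_total_bounds t Ht)].
  apply Rmin_pos; [apply init_nonneg; lra | apply Rdiv_lt_0_compat; lra].
Qed.

Lemma Sh_pos (t : R) : 0 < t -> 0 < Sh t.
Proof.
  intros Ht.
  apply (integrating_factor_pos Sh
    (fun r => Cvh * (extend_left 0 Iv r / (extend_left 0 Sv r + extend_left 0 Iv r)) + muh)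
    (fun _ => bh)) with (p := 0).
  - intros s. apply ext0_cont.
  - intros s. destruct (ext0_cont s) as [_ [_ [HSv HIv]]].
    apply continuity_pt_plus; [|apply continuity_pt_cst].
    apply continuity_pt_mult; [apply continuity_pt_cst|].
    apply continuity_pt_div; [exact HIv | apply continuity_pt_plus; assumption|].
    apply Rgt_not_eq, vector_total_pos, Rmax_r.
  - intros r Hr. rewrite !extend_left_eq by lra.
    replace (bh - (Cvh * (Iv r / (Sv r + Iv r)) + muh) * Sh r)
      with (f_Sh bh Cvh muh (Sh r) (Sv r) (Iv r)) by (unfold f_Sh; ring).
    apply sol_derive, Hr.
  - lra.
  - intros; lra.
  - apply init_nonneg. lra.
Qed.

Lemma Sv_pos (t : R) : 0 < t -> 0 < Sv t.
Proof.
  intros Ht.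
  apply (integrating_factor_pos Sv (fun r => Chv * extend_left 0 Ih r + muv) (fun _ => bv))
    with (p := 0).
  - intros s. apply ext0_cont.
  - intros s. apply continuity_pt_plus; [|apply continuity_pt_cst].
    apply continuity_pt_mult; [apply continuity_pt_cst | apply ext0_cont].
  - intros r Hr. rewrite extend_left_eq by lra.
    replace (bv - (Chv * Ih r + muv) * Sv r) with (f_Sv bv Chv muv (Ih r) (Sv r))
      by (unfold f_Sv; ring).
    apply sol_derive, Hr.
  - lra.
  - intros; lra.
  - apply init_nonneg. lra.
Qed.

Let Ih_derive (r : R) : 0 < r ->
  is_derive Ih r ((Cvh * (Iv (r - tau) / (Sv (r - tau) + Iv (r - tau))) * Sh (r - tau))
                  - (fun _ => muh) r * Ih r).
Proof. intros Hr. now destruct (sol_derive r Hr) as [_ [D _]]. Qed.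

Let Iv_derive (r : R) : 0 < r ->
  is_derive Iv r (Chv * Ih r * Sv r - (fun _ => muv) r * Iv r).
Proof. intros Hr. now destruct (sol_derive r Hr) as [_ [_ [_ D]]]. Qed.

(* [Ih] and [Iv] feed each other, [Ih] through the delay, so their signs are propagated
   together by continuous induction. *)
Lemma Ih_pos_Iv_nonneg (t : R) : 0 <= t -> 0 < Ih t /\ 0 <= Iv t.
Proof.
  assert (Hcst : forall m s, continuity_pt (fun _ : R => m) s) by (intros; apply continuity_pt_cst).
  assert (HIh_cont : forall s, continuity_pt (extend_left 0 Ih) s) by apply ext0_cont.
  assert (HIv_cont : forall s, continuity_pt (extend_left 0 Iv) s) by apply ext0_cont.
  assert (Hsource : forall r, 0 < r -> (0 < r - tau -> 0 <= Iv (r - tau)) ->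
            0 <= Cvh * (Iv (r - tau) / (Sv (r - tau) + Iv (r - tau))) * Sh (r - tau)).
  { intros r Hr HIv. destruct (Rle_lt_dec (r - tau) 0) as [Hle|Hgt].
    - destruct (init_nonneg (r - tau)) as [HS [_ [_ [HI HN]]]]; [lra|].
      apply Rmult_le_pos; [apply Rmult_le_pos; [lra | apply Rdiv_le_0_compat; lra] | exact HS].
    - pose proof (Sh_pos _ Hgt). pose proof (vector_total_pos (r - tau) ltac:(lra)).
      pose proof (HIv Hgt).
      apply Rmult_le_pos; [apply Rmult_le_pos; [lra | apply Rdiv_le_0_compat; lra] | lra]. }
  assert (HIv_prop : forall p q, 0 <= p <= q -> (forall r, p < r < q -> 0 < Ih r) ->
            0 <= Iv p -> 0 <= Iv q).
  { intros p q Hpq HIh. apply (integrating_factor_nonneg Iv (fun _ => muv) _ HIv_cont (Hcst muv)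
      Iv_derive p q Hpq).
    intros r Hr. pose proof (HIh r Hr). pose proof (Sv_pos r ltac:(lra)).
    apply Rmult_le_pos; [apply Rmult_le_pos|]; lra. }
  revert t. apply (real_induction (fun t => 0 < Ih t /\ 0 <= Iv t)). intros s Hs IH.
  assert (HIhs : 0 < Ih s).
  { apply (integrating_factor_pos_of_pos Ih (fun _ => muh) _ HIh_cont (Hcst muh) Ih_derive 0 s);
      [lra | | apply init].
    intros r Hr. apply Hsource; [lra|]. intros Hrt. apply IH. lra. }
  assert (HIvs : 0 <= Iv s).
  { apply (HIv_prop 0 s); [lra | | apply init_nonneg; lra]. intros r Hr. apply IH. lra. }
  destruct (continuity_pt_abs _ _ (HIh_cont s) (Ih s) HIhs) as [eta [Heta Hnear]].
  assert (HIh_near : forall r, s <= r < s + eta -> 0 < Ih r).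
  { intros r Hr. specialize (Hnear r ltac:(apply Rabs_def1; lra)).
    rewrite !extend_left_eq in Hnear by lra. apply Rabs_def2 in Hnear. lra. }
  exists eta. split; [exact Heta|]. intros r Hr. split; [now apply HIh_near|].
  apply (HIv_prop s r); [lra | | exact HIvs]. intros r' Hr'. apply HIh_near. lra.
Qed.

Lemma solution_pos (t : R) : 0 < t -> 0 < Sh t /\ 0 < Ih t /\ 0 < Sv t /\ 0 < Iv t.
Proof.
  intros Ht. repeat split; [now apply Sh_pos | apply Ih_pos_Iv_nonneg; lra | now apply Sv_pos|].
  apply (integrating_factor_pos Iv (fun _ => muv) (fun r => Chv * Ih r * Sv r)
    (fun s => proj2 (proj2 (proj2 (ext0_cont s)))) (fun s => continuity_pt_cst muv s)
    Iv_derive 0 t);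
    [lra | | apply Ih_pos_Iv_nonneg; lra].
  intros r Hr. pose proof (Sv_pos r ltac:(lra)). pose proof (Ih_pos_Iv_nonneg r ltac:(lra)).
  apply Rmult_lt_0_compat; [apply Rmult_lt_0_compat|]; lra.
Qed.

Lemma solution_reduced_system (a : R) : - tau <= a -> 0 <= a + tau ->
  (forall s, a <= s -> 0 < Sh s /\ 0 < Ih s /\ 0 < Sv s /\ 0 < Iv s) ->
  reduced_system bh muh Cvh Chv muv tau (turnover_gap bv muv (Sv 0 + Iv 0)) (a + tau)
    (extend_left a Sh) (extend_left a Ih) (extend_left a (infected_fraction Sv Iv))
    (fun r => bv / (Sv r + Iv r)).
Proof.
  intros Ha Hat Hpos.
  assert (Hposa : forall s, 0 < Sh (Rmax s a) /\ 0 < Ih (Rmax s a) /\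
                            0 < Sv (Rmax s a) /\ 0 < Iv (Rmax s a))
    by (intros s; apply Hpos, Rmax_r).
  split; [|split].
  - intros s. destruct (solution_extend_continuous a Ha s) as [C1 [C2 [C3 C4]]].
    repeat split; try assumption.
    apply continuity_pt_div; [exact C4 | apply continuity_pt_plus; assumption|].
    destruct (Hposa s) as [_ [_ [? ?]]]. unfold extend_left. lra.
  - intros s. destruct (Hposa s) as [P1 [P2 [P3 P4]]].
    unfold extend_left, infected_fraction. repeat split; try assumption.
    + apply Rdiv_lt_0_compat; lra.
    + apply Rlt_div_l; lra.
  - intros t Ht. destruct (sol_derive t ltac:(lra)) as [D1 [D2 [D3 D4]]].
    destruct (Hposa t) as [_ [_ [P3 P4]]]. rewrite Rmax_left in P3, P4 by lra.
    rewrite !(extend_left_eq a _ t), !(extend_left_eq a _ (t - tau)) by lra.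
    unfold infected_fraction. split; [|split; [|split]].
    + apply is_derive_extend_left; [lra | exact D1].
    + apply is_derive_extend_left; [lra | exact D2].
    + apply (is_derive_extend_left a (infected_fraction Sv Iv)); [lra|].
      replace (Chv * Ih t * (1 - Iv t / (Sv t + Iv t))
               - bv / (Sv t + Iv t) * (Iv t / (Sv t + Iv t)))
        with ((f_Iv Chv muv (Ih t) (Sv t) (Iv t) * (Sv t + Iv t)
               - Iv t * (f_Sv bv Chv muv (Ih t) (Sv t) + f_Iv Chv muv (Ih t) (Sv t) (Iv t)))
              / (Sv t + Iv t) ^ 2) by (unfold f_Sv, f_Iv; field; lra).
      apply is_derive_fraction; [exact D3 | exact D4 | lra].
    + rewrite (vector_total_explicit t) by lra.
      apply turnover_rate_bound; [lra | lra | apply vector_total_pos; lra|].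
      split; [apply exp_pos | apply exp_neg_mul_le1; lra].
Qed.

Lemma vector_total_converges : is_lim (fun t => Sv t + Iv t) p_infty Ns.
Proof.
  apply (is_lim_ext_loc (fun t => Ns + (Sv 0 + Iv 0 - Ns) * exp (- muv * t))).
  - exists 0. intros t Ht. symmetry. now apply vector_total_explicit, Rlt_le.
  - now apply is_lim_relaxation.
Qed.

Lemma solution_converges :
  is_lim Sh p_infty xs /\ is_lim Ih p_infty ys /\
  is_lim Sv p_infty ((1 - us) * Ns) /\ is_lim Iv p_infty (us * Ns).
Proof.
  destruct star_spec as [[Hus Hus1] [Hxs [Hys [E1 [E2 E3]]]]].
  set (Nmin := Rmin (Sv 0 + Iv 0) Ns).
  assert (HNmin : 0 < Nmin) by (apply Rmin_pos; [apply vector_total_pos; lra | exact Ns_pos]).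
  pose proof (solution_reduced_system 1 ltac:(lra) ltac:(lra)
                (fun s Hs => solution_pos s ltac:(lra))) as Hred.
  assert (Hm : forall t, 1 + tau < t -> 0 <= bv / (Sv t + Iv t) <= bv / Nmin).
  { intros t Ht. destruct (vector_total_bounds t ltac:(lra)) as [B1 _].
    change (Nmin <= Sv t + Iv t) in B1. split.
    - apply Rdiv_le_0_compat; lra.
    - apply Rmult_le_compat_l; [lra|]. apply Rinv_le_contravar; lra. }
  assert (HD : 0 <= turnover_gap bv muv (Sv 0 + Iv 0))
    by (apply turnover_gap_nonneg, vector_total_pos; lra).
  pose proof (reduced_x_converges _ _ _ _ _ _ _ _ muh_pos muv_pos Hxs Hys Hus Hus1 E1 E2 E3
                _ _ _ tau_ge0 HD _ _ _ _ Hred) as Cx.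
  pose proof (reduced_u_converges _ _ _ _ _ _ _ _ muh_pos muv_pos Hxs Hys Hus Hus1 E1 E2 E3
                _ _ _ tau_ge0 HD _ _ _ _ Hred _ Hm) as Cu.
  pose proof (reduced_ratio_converges _ _ _ _ _ _ _ _ muh_pos muv_pos Hxs Hys Hus Hus1 E1 E2 E3
                _ _ _ tau_ge0 HD _ _ _ _ Hred _ Hm) as Cyu.
  pose proof vector_total_converges as CN.
  assert (Heq : forall f : R -> R, Rbar_locally' p_infty (fun t => extend_left 1 f t = f t))
    by (intros f; exists 1; intros t Ht; apply extend_left_eq; lra).
  assert (CIv : is_lim Iv p_infty (us * Ns)).
  { apply (is_lim_ext_loc (fun t => extend_left 1 (infected_fraction Sv Iv) t * (Sv t + Iv t)));
      [|exact (is_lim_mult _ _ _ _ _ Cu CN I)].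
    exists 1. intros t Ht. rewrite extend_left_eq by lra. unfold infected_fraction.
    field. apply Rgt_not_eq, vector_total_pos. lra. }
  repeat split; [exact (is_lim_ext_loc _ _ _ _ (Heq Sh) Cx) | | | exact CIv].
  - set (u := extend_left 1 (infected_fraction Sv Iv)) in *.
    apply (is_lim_ext_loc (fun t => ys * (extend_left 1 Ih t / ys - u t / us) + ys / us * u t)).
    + exists 1. intros t Ht. rewrite extend_left_eq by lra. field. lra.
    + apply (is_lim_plus _ _ _ _ _ _ (is_lim_scal_l _ _ _ _ Cyu) (is_lim_scal_l _ _ _ _ Cu)).
      unfold is_Rbar_plus. simpl. do 2 f_equal. field. lra.
  - apply (is_lim_ext_loc (fun t => (Sv t + Iv t) - Iv t)); [exists 0; intros t _; ring|].
    apply (is_lim_minus _ _ _ _ _ _ CN CIv).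
    unfold is_Rbar_minus, is_Rbar_plus. simpl. do 2 f_equal. ring.
Qed.

Let near (delta : R) : Prop := forall t, - tau <= t <= 0 ->
  Rabs (Sh t - xs) < delta /\ Rabs (Ih t - ys) < delta /\
  Rabs (Sv t - (1 - us) * Ns) < delta /\ Rabs (Iv t - us * Ns) < delta.

Let Phi (t : R) : R :=
  lyap_Phi muh muv xs ys us tau (turnover_gap bv muv (Sv 0 + Iv 0))
    (extend_left (- tau) Sh) (extend_left (- tau) Ih)
    (extend_left (- tau) (infected_fraction Sv Iv)) t.

Lemma vector_total_near (delta t : R) : near delta -> 0 <= t ->
  Rabs (Sv t + Iv t - Ns) <= 2 * delta.
Proof.
  intros Hnear Ht. destruct (Hnear 0 ltac:(lra)) as [_ [_ [H3 H4]]].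
  rewrite (vector_total_explicit t Ht). fold Ns.
  replace (Ns + (Sv 0 + Iv 0 - Ns) * exp (- muv * t) - Ns)
    with (((Sv 0 - (1 - us) * Ns) + (Iv 0 - us * Ns)) * exp (- muv * t)) by ring.
  rewrite Rabs_mult, (Rabs_pos_eq (exp _)) by (left; apply exp_pos).
  pose proof (exp_pos (- muv * t)). pose proof (exp_neg_mul_le1 muv t ltac:(lra) Ht).
  pose proof (Rabs_triang (Sv 0 - (1 - us) * Ns) (Iv 0 - us * Ns)).
  pose proof (Rabs_pos (Sv 0 - (1 - us) * Ns + (Iv 0 - us * Ns))). nra.
Qed.

Lemma solution_pos_near (delta : R) : admissible delta -> near delta ->
  forall s, - tau <= s -> 0 < Sh s /\ 0 < Ih s /\ 0 < Sv s /\ 0 < Iv s.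
Proof.
  intros Hadm Hnear s Hs. destruct (Rle_lt_dec s 0) as [Hs0|Hs0]; [|now apply solution_pos].
  destruct (Hnear s ltac:(lra)) as [D1 [D2 [D3 D4]]].
  apply Rabs_def2 in D1. apply Rabs_def2 in D2. apply Rabs_def2 in D3. apply Rabs_def2 in D4.
  destruct Hadm as [_ [_ [H2 [H3 [H4 [H5 _]]]]]]. repeat split; lra.
Qed.

Lemma lyap_Phi_near_decrease (delta t : R) : admissible delta -> near delta -> 0 <= t ->
  Phi t <= Phi 0.
Proof.
  intros Hadm Hnear Ht.
  destruct star_spec as [[Hus Hus1] [Hxs [Hys [E1 [E2 E3]]]]].
  pose proof (solution_reduced_system (- tau) ltac:(lra) ltac:(lra)
                (solution_pos_near delta Hadm Hnear)) as Hred.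
  pose proof (lyap_Phi_decrease _ _ _ _ _ _ _ _ muh_pos muv_pos Hxs Hys Hus Hus1 E1 E2 E3
                _ _ _ _ _ _ _ Hred 0 t 0 ltac:(lra)) as Hdec.
  unfold Phi. rewrite Rmult_0_l, Rminus_0_r in Hdec. apply Hdec.
  intros s _.
  exact (lyap_W_nonneg _ _ _ _ _ _ _ _ muh_pos muv_pos Hys Hus Hus1 E3 _ _ _ _ _ _ _ Hred s).
Qed.

Lemma fraction_near (delta s : R) : admissible delta -> near delta -> - tau <= s <= 0 ->
  Rabs (infected_fraction Sv Iv s - us) <= K1 * delta.
Proof.
  intros Hadm Hnear Hs. destruct (Hnear s Hs) as [_ [_ [H3 H4]]].
  destruct star_spec as [Hus _]. destruct Hadm as [Hd [_ [_ [_ [_ [_ [HdN _]]]]]]].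
  now apply fraction_close.
Qed.

Lemma window_integrand_near (delta s : R) : admissible delta -> near delta -> - tau <= s <= 0 ->
  volterra (Sh s * infected_fraction Sv Iv s / (xs * us)) <= 2 * (K2 * delta) ^ 2.
Proof.
  intros Hadm Hnear Hs. destruct star_spec as [[Hus Hus1] [Hxs _]].
  pose proof Hadm as [Hd [_ [_ [_ [_ [_ [_ [_ HK2]]]]]]]]. destruct gains_pos as [_ [HK2p _]].
  destruct (Hnear s Hs) as [D1 _].
  destruct (solution_pos_near delta Hadm Hnear s ltac:(lra)) as [_ [_ [P3 P4]]].
  assert (Hu : 0 < infected_fraction Sv Iv s < 1)
    by (unfold infected_fraction; split; [apply Rdiv_lt_0_compat | apply Rlt_div_l]; lra).
  pose proof (product_ratio_close (Sh s) _ xs us delta K1 Hxs Hus Hu ltac:(lra)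
                (fraction_near delta s Hadm Hnear Hs)) as Hz.
  fold K2 in Hz. eapply Rle_trans; [apply volterra_le_near1; lra|].
  apply Rmult_le_compat_l; [lra|]. rewrite <- !Rsqr_pow2, (Rsqr_abs (_ - 1)).
  apply Rsqr_incr_1; [exact Hz | apply Rabs_pos | apply Rmult_le_pos; lra].
Qed.

Lemma turnover_term_near (delta : R) : admissible delta -> near delta ->
  k * turnover_gap bv muv (Sv 0 + Iv 0) / muv <= 4 * k / Ns * delta.
Proof.
  intros Hadm Hnear. pose proof Hadm as [Hd [_ [_ [_ [_ [_ [HdN _]]]]]]].
  destruct gains_pos as [_ [_ [Hk _]]].
  pose proof (turnover_gap_near bv muv (Sv 0 + Iv 0) delta bv_pos muv_pos
                ltac:(pose proof (vector_total_near delta 0 Hnear ltac:(lra)); fold Ns; lra)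
                ltac:(fold Ns; lra)) as HD.
  fold Ns in HD. unfold Rdiv at 1. rewrite Rmult_assoc.
  apply (Rle_trans _ (k * (4 * bv * delta / Ns ^ 2 * / muv))).
  - apply Rmult_le_compat_l; [lra|].
    apply Rmult_le_compat_r; [left; apply Rinv_0_lt_compat, muv_pos | exact HD].
  - right. unfold Ns. field. lra.
Qed.

Lemma lyap_Phi_near_init (delta : R) : admissible delta -> near delta ->
  Phi 0 <= init_gain * delta.
Proof.
  intros Hadm Hnear.
  destruct star_spec as [[Hus Hus1] [Hxs [Hys _]]].
  pose proof Hadm as [Hd [Hd1 [Hdx [Hdy [_ [_ [HdN [HK1 HK2]]]]]]]].
  destruct gains_pos as [HK1p [HK2p [Hk Hbeta]]].
  pose proof (solution_reduced_system (- tau) ltac:(lra) ltac:(lra)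
                (solution_pos_near delta Hadm Hnear)) as Hred.
  destruct (Hnear 0 ltac:(lra)) as [C1 [C2 _]].
  unfold Phi, lyap_Phi, lyap_V. rewrite !extend_left_eq, Rmult_0_r, exp_0, Rmult_1_r by lra.
  fold k beta.
  assert (T1 : xs * volterra (Sh 0 / xs) <= 2 * delta ^ 2 / xs)
    by (apply volterra_scaled_le_near; lra).
  assert (T2 : ys * volterra (Ih 0 / ys) <= 2 * delta ^ 2 / ys)
    by (apply volterra_scaled_le_near; lra).
  assert (T3 : k * (us * volterra (infected_fraction Sv Iv 0 / us))
               <= k * (2 * (K1 * delta) ^ 2 / us)).
  { apply Rmult_le_compat_l; [lra|]. apply volterra_scaled_le_near; [lra | | lra].
    apply fraction_near; [assumption.. | lra]. }
  assert (T4 : beta * RInt (fun s => volterra (extend_left (- tau) Sh s *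
                 extend_left (- tau) (infected_fraction Sv Iv) s / (xs * us))) (0 - tau) 0
               <= beta * (tau * (2 * (K2 * delta) ^ 2))).
  { apply Rmult_le_compat_l; [lra|].
    apply (Rle_trans _ ((0 - (0 - tau)) * (2 * (K2 * delta) ^ 2))); [|right; ring].
    apply RInt_le_const; [|lra|].
    - intros s. eapply lyap_integrand_continuous; [exact Hxs | exact Hus | exact Hred].
    - intros s Hs. rewrite !extend_left_eq by lra.
      apply window_integrand_near; [assumption.. | lra]. }
  pose proof (turnover_term_near delta Hadm Hnear) as T5.
  assert (Hsq : forall c, 0 <= c -> c * delta ^ 2 <= c * delta)
    by (intros c Hc; apply Rmult_le_compat_l; nra).
  pose proof (Hsq (2 / xs) ltac:(apply Rdiv_le_0_compat; lra)).
  pose proof (Hsq (2 / ys) ltac:(apply Rdiv_le_0_compat; lra)).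
  pose proof (pow2_ge_0 K1). pose proof (pow2_ge_0 K2).
  pose proof (Hsq (2 * k * K1 ^ 2 / us) ltac:(apply Rdiv_le_0_compat; nra)).
  pose proof (Hsq (2 * beta * tau * K2 ^ 2) ltac:(apply Rmult_le_pos; nra)).
  unfold init_gain. lra.
Qed.

Lemma volterra_terms_le_Phi (delta t : R) : admissible delta -> near delta -> 0 <= t ->
  xs * volterra (Sh t / xs) + ys * volterra (Ih t / ys)
  + k * (us * volterra (infected_fraction Sv Iv t / us)) <= Phi t.
Proof.
  intros Hadm Hnear Ht.
  destruct star_spec as [[Hus Hus1] [Hxs [Hys _]]].
  pose proof (solution_reduced_system (- tau) ltac:(lra) ltac:(lra)
                (solution_pos_near delta Hadm Hnear)) as Hred.
  pose proof (lyap_Phi_ge_volterra _ _ _ _ _ _ _ _ muh_pos muv_pos Hxs Hys Hus _ _ _ tau_ge0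
                (turnover_gap_nonneg bv muv _ bv_pos muv_pos (vector_total_pos 0 ltac:(lra)))
                _ _ _ _ Hred t) as Hge.
  rewrite !extend_left_eq in Hge by lra. exact Hge.
Qed.

End Solution.

Let init_gain_pos : 0 < init_gain.
Proof.
  destruct star_spec as [[Hus Hus1] [Hxs [Hys _]]]. destruct gains_pos as [_ [_ [Hk Hbeta]]].
  pose proof (pow2_ge_0 K1). pose proof (pow2_ge_0 K2).
  assert (0 < 2 / xs) by (apply Rdiv_lt_0_compat; lra).
  assert (0 < 2 / ys) by (apply Rdiv_lt_0_compat; lra).
  assert (0 <= 2 * k * K1 ^ 2 / us) by (apply Rdiv_le_0_compat; nra).
  assert (0 <= 2 * beta * tau * K2 ^ 2) by (apply Rmult_le_pos; nra).
  assert (0 < 4 * k / Ns) by (apply Rdiv_lt_0_compat; lra).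
  unfold init_gain. lra.
Qed.

(* The tolerance on [c] leaves room for the factor [Nv <= Ns + 1] in [Iv = u Nv]. *)
Lemma endemic_volterra_small (eps : R) : 0 < eps -> exists eta, 0 < eta /\
  forall a b c, 0 < a -> 0 < b -> 0 < c ->
  xs * volterra (a / xs) + ys * volterra (b / ys) + k * (us * volterra (c / us)) <= eta ->
  Rabs (a - xs) < eps /\ Rabs (b - ys) < eps /\ Rabs (c - us) < eps / (4 * (Ns + 1)).
Proof.
  intros Heps. destruct star_spec as [[Hus Hus1] [Hxs [Hys _]]].
  destruct gains_pos as [_ [_ [Hk _]]].
  assert (Hr : 0 < eps / (4 * (Ns + 1))) by (apply Rdiv_lt_0_compat; lra).
  destruct (volterra_scaled_small xs eps Hxs Heps) as [eta1 [Heta1 Hx]].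
  destruct (volterra_scaled_small ys eps Hys Heps) as [eta2 [Heta2 Hy]].
  destruct (volterra_scaled_small us _ Hus Hr) as [eta3 [Heta3 Hu]].
  exists (Rmin (Rmin eta1 eta2) (k * eta3)). split; [repeat apply Rmin_pos; nra|].
  intros a b c Ha Hb Hc Hsum. rewrite !Rle_Rmin_iff in Hsum.
  pose proof (volterra_scaled_ge0 xs a Hxs Ha). pose proof (volterra_scaled_ge0 ys b Hys Hb).
  pose proof (volterra_scaled_ge0 us c Hus Hc).
  assert (0 <= k * (us * volterra (c / us))) by (apply Rmult_le_pos; lra).
  repeat split; [apply Hx | apply Hy | apply Hu]; try lra.
  apply (Rmult_le_reg_l k); lra.
Qed.

Lemma endemic_stable (eps : R) : 0 < eps -> exists delta, 0 < delta /\
  forall Sh Ih Sv Iv : R -> R,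
    init_in_D tau Sh Ih Sv Iv -> is_solution bh bv muh muv Cvh Chv tau Sh Ih Sv Iv ->
    (forall t, - tau <= t <= 0 ->
       Rabs (Sh t - xs) < delta /\ Rabs (Ih t - ys) < delta /\
       Rabs (Sv t - (1 - us) * Ns) < delta /\ Rabs (Iv t - us * Ns) < delta) ->
    forall t, - tau <= t ->
       Rabs (Sh t - xs) < eps /\ Rabs (Ih t - ys) < eps /\
       Rabs (Sv t - (1 - us) * Ns) < eps /\ Rabs (Iv t - us * Ns) < eps.
Proof.
  intros Heps. destruct star_spec as [[Hus Hus1] _].
  destruct (endemic_volterra_small eps Heps) as [eta [Heta Hsmall]].
  destruct admissible_exists as [d0 [Hd0 Hdown]].
  set (delta := Rmin (Rmin d0 (eps / 8)) (eta / init_gain)).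
  assert (Hdelta : 0 < delta)
    by (repeat apply Rmin_pos; [apply Hd0 | lra | apply Rdiv_lt_0_compat, init_gain_pos; lra]).
  assert (Hdd : delta <= d0 /\ delta <= eps / 8 /\ init_gain * delta <= eta).
  { pose proof (Rle_refl delta) as H. unfold delta at 2 in H. rewrite !Rle_Rmin_iff in H.
    destruct H as [[H1 H2] H3]. apply Rle_div_r in H3; [|exact init_gain_pos]. lra. }
  exists delta. split; [exact Hdelta|].
  intros Sh Ih Sv Iv Hinit Hsol Hnear t Ht.
  destruct (Rle_lt_dec t 0) as [Ht0|Ht0].
  { destruct (Hnear t ltac:(lra)) as [? [? [? ?]]]. repeat split; lra. }
  assert (Hadm : admissible delta) by (apply Hdown; lra).
  pose proof Hadm as [_ [Hhalf _]].
  pose proof (lyap_Phi_near_decrease Sh Ih Sv Iv Hinit Hsol delta t Hadm Hnear ltac:(lra)) as Hdec.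
  pose proof (lyap_Phi_near_init Sh Ih Sv Iv Hinit Hsol delta Hadm Hnear) as Hinit0.
  pose proof (volterra_terms_le_Phi Sh Ih Sv Iv Hinit Hsol delta t Hadm Hnear ltac:(lra)) as Hsum.
  cbv beta in Hdec, Hinit0, Hsum.
  destruct (solution_pos Sh Ih Sv Iv Hinit Hsol t Ht0) as [P1 [P2 [P3 P4]]].
  destruct (Hsmall (Sh t) (Ih t) (infected_fraction Sv Iv t)) as [Cx [Cy Cu]];
    [lra | lra | apply Rdiv_lt_0_compat; lra | lra|].
  pose proof (vector_total_near Sh Ih Sv Iv Hinit Hsol delta t Hnear ltac:(lra)) as HN.
  destruct (vector_split_close (Sv t) (Iv t) us Ns _ (2 * delta) (conj Hus Hus1) Ns_pos
              ltac:(lra) ltac:(lra) Cu HN) as [HIv HSv].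
  replace (eps / (4 * (Ns + 1)) * (Ns + 1)) with (eps / 4) in HIv, HSv by (field; lra).
  repeat split; lra.
Qed.

End Model.

Theorem theorem6 (bh bv muh muv Cvh Chv tau : R) :
  0 < bh -> 0 < bv -> 0 < muh -> 0 < muv -> 0 < Cvh -> 0 < Chv -> 0 <= tau ->
  repro_number bh muh muv Cvh Chv > 1 ->
  exists Sh' Ih' Sv' Iv' : R,
    (* E* = (Sh',Ih',Sv',Iv') is the unique equilibrium with positive components *)
    (0 < Sh' /\ 0 < Ih' /\ 0 < Sv' /\ 0 < Iv' /\
     is_equilibrium bh bv muh muv Cvh Chv Sh' Ih' Sv' Iv') /\
    (forall a b c d : R, 0 < a -> 0 < b -> 0 < c -> 0 < d ->
       is_equilibrium bh bv muh muv Cvh Chv a b c d ->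
       a = Sh' /\ b = Ih' /\ c = Sv' /\ d = Iv') /\
    (* Lyapunov stability (sup-norm on C([-tau,0],R^4)) *)
    (forall eps, 0 < eps -> exists delta, 0 < delta /\
       forall Sh Ih Sv Iv : R -> R,
         init_in_D tau Sh Ih Sv Iv ->
         is_solution bh bv muh muv Cvh Chv tau Sh Ih Sv Iv ->
         (forall t, - tau <= t <= 0 ->
            Rabs (Sh t - Sh') < delta /\ Rabs (Ih t - Ih') < delta /\
            Rabs (Sv t - Sv') < delta /\ Rabs (Iv t - Iv') < delta) ->
         forall t, - tau <= t ->
            Rabs (Sh t - Sh') < eps /\ Rabs (Ih t - Ih') < eps /\
            Rabs (Sv t - Sv') < eps /\ Rabs (Iv t - Iv') < eps) /\
    (* global attractivity in D *)
    (forall Sh Ih Sv Iv : R -> R,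
       init_in_D tau Sh Ih Sv Iv ->
       is_solution bh bv muh muv Cvh Chv tau Sh Ih Sv Iv ->
       is_lim Sh p_infty Sh' /\ is_lim Ih p_infty Ih' /\
       is_lim Sv p_infty Sv' /\ is_lim Iv p_infty Iv').
Proof.
  intros Hbh Hbv Hmuh Hmuv HCvh HChv Htau HR0.
  apply repro_number_gt1 in HR0; try assumption.
  destruct (endemic_star_spec bh muh muv Cvh Chv) as [[Hus Hus1] [Hxs [Hys _]]]; try assumption.
  assert (HNs : 0 < bv / muv) by (apply Rdiv_lt_0_compat; assumption).
  exists (Sh_star bh muh muv Cvh Chv), (Ih_star bh muh muv Cvh Chv),
    ((1 - u_star bh muh muv Cvh Chv) * (bv / muv)), (u_star bh muh muv Cvh Chv * (bv / muv)).
  split; [|split; [|split]].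
  - refine (conj Hxs (conj Hys (conj _ (conj _ _)))); [apply Rmult_lt_0_compat; lra..|].
    now apply endemic_is_equilibrium.
  - intros a b c d Ha Hb Hc Hd Heq. now apply positive_equilibrium_unique.
  - intros eps Heps. now apply endemic_stable.
  - intros Sh Ih Sv Iv Hinit Hsol. now apply (solution_converges bh bv muh muv Cvh Chv tau).
Qed.
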